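(* Let $\Lambda,\mu,\beta,\rho,\phi,\alpha,\omega>0$, $\psi\ge 0$, $0<\eta_C\le1$, $\eta_A\ge 1$, and set $\beta_1=\beta\mu/\Lambda$, $\xi_1=\alpha+\mu$, $\xi_2=\omega+\mu$, $\xi_3=\rho+\phi+\mu$. Consider the system \begin{align*} \dot S&=\Lambda-\beta_1(I+\eta_C C+\eta_A A)S-(\mu+\psi)S,\\ \dot I&=\beta_1(I+\eta_C C+\eta_A A)S-\xi_3 I+\alpha A+\omega C,\\ \dot C&=\phi I-\xi_2 C,\\ \dot A&=\rho I-\xi_1 A,\\ \dot E&=\psi S-\mu E, \end{align*} on the region $\Omega_P=\{(S,I,C,A,E)\in\mathbb{R}_{\ge0}^5: S\le \Lambda/(\psi+\mu),\ E\le \psi\Lambda/(\mu(\psi+\mu)),\ S+I+C+A+E\le\Lambda/\mu\}$, and let $\Omega_{P0}=\{(S,I,C,A,E)\in\Omega_P: I=C=A=0\}$. Define $$R_0=\frac{\Lambda\,\beta_1\bigl(\xi_2(\xi_1+\rho\eta_A)+\eta_C\phi\xi_1\bigr)}{(\mu+\psi)\,\mu\bigl(\xi_2(\rho+\xi_1)+\phi\xi_1\bigr)}.$$ If $R_0>1$, then the unique endemic equilibrium $\tilde\Sigma_+=(\tilde S,\tilde I,\tilde C,\tilde A,\tilde E)$ of this system (the unique equilibrium with $\tilde I,\tilde C,\tilde A>0$), whose first and last components are $$\tilde S=\frac{\mu(\xi_1(\phi+\xi_2)+\rho\xi_2)}{\beta_1(\xi_1(\xi_2+\eta_C\phi)+\eta_A\rho\xi_2)},\qquad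 \tilde E=\frac{\psi\,\tilde S}{\mu},$$ is globally asymptotically stable in $\Omega_P\setminus\Omega_{P0}$.
   Context: This is the limiting (mass-action) form of an HIV/AIDS model with pre-exposure prophylaxis (PrEP), in the case of zero AIDS-induced death rate and no abandonment of PrEP: $S$ susceptible, $I$ pre-AIDS HIV-infected, $C$ HIV-infected under antiretroviral treatment, $A$ with AIDS symptoms, $E$ susceptible individuals under PrEP; $\psi$ is the rate at which susceptibles start PrEP. $R_0$ is the basic reproduction number of this system. *)

From Stdlib Require Import Reals Lra.
Open Scope R_scope.

Record State : Type := mkState { sS : R; sI : R; sC : R; sA : R; sE : R }.

Record Params : Type := mkParams {
  Lam : R; mu : R; beta : R; rho : R; phi : R; alpha : R; omega : R;
  psi : R; etaC : R; etaA : R }.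

Section Model.
Variable P : Params.
Let Lam := Lam P. Let mu := mu P. Let beta := beta P. Let rho := rho P.
Let phi := phi P. Let alpha := alpha P. Let omega := omega P. Let psi := psi P.
Let etaC := etaC P. Let etaA := etaA P.

Definition beta1 : R := beta * mu / Lam.
Definition xi1 : R := alpha + mu.
Definition xi2 : R := omega + mu.
Definition xi3 : R := rho + phi + mu.

Definition fS (x : State) : R :=
  Lam - beta1 * (sI x + etaC * sC x + etaA * sA x) * sS x - (mu + psi) * sS x.
Definition fI (x : State) : R :=
  beta1 * (sI x + etaC * sC x + etaA * sA x) * sS x - xi3 * sI x
  + alpha * sA x + omega * sC x.
Definition fC (x : State) : R := phi * sI x - xi2 * sC x.
Definition fA (x : State) : R := rho * sI x - xi1 * sA x.
Definition fE (x : State) : R := psi * sS x - mu * sE x.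

Definition is_equilibrium (x : State) : Prop :=
  fS x = 0 /\ fI x = 0 /\ fC x = 0 /\ fA x = 0 /\ fE x = 0.

Definition OmegaP (x : State) : Prop :=
  0 <= sS x /\ 0 <= sI x /\ 0 <= sC x /\ 0 <= sA x /\ 0 <= sE x /\
  sS x <= Lam / (psi + mu) /\
  sE x <= psi * Lam / (mu * (psi + mu)) /\
  sS x + sI x + sC x + sA x + sE x <= Lam / mu.

Definition OmegaP0 (x : State) : Prop :=
  OmegaP x /\ sI x = 0 /\ sC x = 0 /\ sA x = 0.

Definition repro_number : R :=
  Lam * beta1 * (xi2 * (xi1 + rho * etaA) + etaC * phi * xi1)
  / ((mu + psi) * mu * (xi2 * (rho + xi1) + phi * xi1)).

Definition is_solution (x : R -> State) : Prop :=
  (forall t, 0 < t ->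
     derivable_pt_lim (fun s => sS (x s)) t (fS (x t)) /\
     derivable_pt_lim (fun s => sI (x s)) t (fI (x t)) /\
     derivable_pt_lim (fun s => sC (x s)) t (fC (x t)) /\
     derivable_pt_lim (fun s => sA (x s)) t (fA (x t)) /\
     derivable_pt_lim (fun s => sE (x s)) t (fE (x t))) /\
  (forall g : State -> R, (g = sS \/ g = sI \/ g = sC \/ g = sA \/ g = sE) ->
     forall eps, 0 < eps -> exists delta, 0 < delta /\
       forall t, 0 <= t < delta -> Rabs (g (x t) - g (x 0)) < eps).

End Model.

Definition dist5 (x y : State) : R :=
  sqrt ((sS x - sS y)^2 + (sI x - sI y)^2 + (sC x - sC y)^2
        + (sA x - sA y)^2 + (sE x - sE y)^2).

Definition GAS_on (is_sol : (R -> State) -> Prop) (D : State -> Prop) (p : State)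
  : Prop :=
  (forall eps, 0 < eps -> exists delta, 0 < delta /\
     forall x, is_sol x -> D (x 0) -> dist5 (x 0) p < delta ->
       forall t, 0 <= t -> dist5 (x t) p < eps) /\
  (forall x, is_sol x -> D (x 0) ->
     forall eps, 0 < eps -> exists T, forall t, T <= t -> dist5 (x t) p < eps).

(* The compartment E does not act back on (S, I, C, A), so it suffices to study that
   subsystem and then the linear equation E' = psi S - mu E.  With the Volterra function
   g(u) = u - 1 - ln u, the Goh-Volterra function
     V = Sbar g(S/Sbar) + Ibar g(I/Ibar) + wC Cbar g(C/Cbar) + wA Abar g(A/Abar)
   has, along solutions in the open orthant, a derivative equal to minus a sum of squares
   and of AM-GM defects.  Its sublevel sets stay away from the boundary of the orthant,
   so positivity persists and the endemic equilibrium is Lyapunov stable.  On a sublevel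
   set V' <= -c ((S - Sbar)^2 + (C/Cbar - I/Ibar)^2 + (A/Abar - I/Ibar)^2), and Barbalat's
   argument makes this quantity, and then S', tend to 0; the S equation then forces
   I -> Ibar, and C, A, E follow.  Solutions starting in Omega_P \ Omega_P0 enter the open
   orthant immediately. *)

From Pilot Require Import Defs.
From Stdlib Require Import Reals Lra Classical.
Open Scope R_scope.

Ltac positivity := solve [
  repeat first [ solve [lra | auto] | apply Rplus_lt_0_compat | apply Rmult_lt_0_compat
               | apply Rdiv_lt_0_compat | apply Rinv_0_lt_compat | apply exp_pos | apply Rmin_pos
               | apply Rgt_not_eq; unfold Rgt ] ].

(** * Calculus on the real line *)

Lemma Rabs_le_inv x a : Rabs x <= a -> - a <= x <= a.
Proof. unfold Rabs; destruct (Rcase_abs x); lra. Qed.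

Lemma eq_div_of_mul_eq x a b : b <> 0 -> x * b = a -> x = a / b.
Proof. intros Hb <-. field. exact Hb. Qed.

Lemma continuity_pt_eps f t : continuity_pt f t -> forall eps, 0 < eps ->
  exists del, 0 < del /\ forall s, Rabs (s - t) < del -> Rabs (f s - f t) < eps.
Proof.
  intros Hf eps Heps.
  destruct (Hf eps Heps) as [del [Hdel Hnear]].
  exists del; split; [exact Hdel |]. intros s Hs.
  destruct (Req_dec t s) as [<- | Hne].
  - rewrite Rminus_diag, Rabs_R0; exact Heps.
  - exact (Hnear s (conj (conj I Hne) Hs)).
Qed.

Lemma continuity_pt_of_deriv f t l : derivable_pt_lim f t l -> continuity_pt f t.
Proof. intro Hf. apply derivable_continuous_pt. exists l. exact Hf. Qed.

Lemma continuity_pt_ge_left f t0 t m : t0 < t -> continuity_pt f t ->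
  (forall s, t0 <= s < t -> m <= f s) -> m <= f t.
Proof.
  intros Ht Hf Hm. apply Rnot_lt_le; intro Hlt.
  destruct (continuity_pt_eps f t Hf (m - f t) ltac:(lra)) as [del [Hdel Hnear]].
  set (s := Rmax t0 (t - del / 2)).
  assert (t0 <= s) by apply Rmax_l.
  assert (t - del / 2 <= s) by apply Rmax_r.
  assert (s < t) by (apply Rmax_lub_lt; lra).
  specialize (Hnear s ltac:(rewrite Rabs_left; lra)).
  specialize (Hm s ltac:(lra)). apply Rabs_def2 in Hnear. lra.
Qed.

Lemma continuity_pt_pos_right f t : continuity_pt f t -> 0 < f t ->
  exists h, 0 < h /\ forall s, t <= s < t + h -> 0 < f s.
Proof.
  intros Hf Hpos. destruct (continuity_pt_eps f t Hf (f t) Hpos) as [del [Hdel Hnear]].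
  exists del; split; [exact Hdel |]. intros s Hs.
  specialize (Hnear s ltac:(rewrite Rabs_right; lra)). apply Rabs_def2 in Hnear. lra.
Qed.

Section MeanValue.
Variables (f f' : R -> R) (a b : R).
Hypothesis hab : a <= b.
Hypothesis hf : forall c, a <= c <= b -> derivable_pt_lim f c (f' c).

Lemma diff_le_of_deriv_le k : (forall c, a < c < b -> f' c <= k) -> f b - f a <= k * (b - a).
Proof.
  intro hk. destruct (Req_dec a b) as [<- | Hne]; [lra |].
  destruct (MVT_cor2 f f' a b ltac:(lra) hf) as [c [-> Hc]].
  apply Rmult_le_compat_r; [lra | auto].
Qed.

Lemma diff_ge_of_deriv_ge k : (forall c, a < c < b -> k <= f' c) -> k * (b - a) <= f b - f a.
Proof.
  intro hk. destruct (Req_dec a b) as [<- | Hne]; [lra |].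
  destruct (MVT_cor2 f f' a b ltac:(lra) hf) as [c [-> Hc]].
  apply Rmult_le_compat_r; [lra | auto].
Qed.

Lemma Rabs_diff_le_of_deriv k : (forall c, a < c < b -> Rabs (f' c) <= k) ->
  Rabs (f b - f a) <= k * (b - a).
Proof.
  intro hk. apply Rabs_le; split.
  - enough (- k * (b - a) <= f b - f a) by lra.
    apply diff_ge_of_deriv_ge. intros c Hc. apply (Rabs_le_inv _ _ (hk c Hc)).
  - apply diff_le_of_deriv_le. intros c Hc. apply (Rabs_le_inv _ _ (hk c Hc)).
Qed.

End MeanValue.

Lemma derivable_pt_lim_sqr f t l : derivable_pt_lim f t l ->
  derivable_pt_lim (fun s => f s ^ 2) t (2 * f t * l).
Proof.
  intro Hf. replace (2 * f t * l) with (l * f t + f t * l) by ring.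
  apply (derivable_pt_lim_ext (fun s => f s * f s)); [intro s; ring |].
  exact (derivable_pt_lim_mult f f t l l Hf Hf).
Qed.

Lemma derivable_pt_lim_div_const f c t l : derivable_pt_lim f t l ->
  derivable_pt_lim (fun s => f s / c) t (l / c).
Proof.
  intro Hf. replace (l / c) with (/ c * l) by (unfold Rdiv; ring).
  apply (derivable_pt_lim_ext (fun s => / c * f s)); [intro s; unfold Rdiv; ring |].
  exact (derivable_pt_lim_scal f (/ c) t l Hf).
Qed.

Lemma derivable_pt_lim_value f t l l' : derivable_pt_lim f t l -> l = l' ->
  derivable_pt_lim f t l'.
Proof. now intros Hf <-. Qed.

Ltac derive :=
  repeat (cbv beta; match goal with
  | |- derivable_pt_lim (fun _ => ?c) _ _ => apply (derivable_pt_lim_const c)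
  | |- derivable_pt_lim (fun s => s) _ _ => apply derivable_pt_lim_id
  | |- derivable_pt_lim (fun s => @?f s + @?g s) _ _ => apply (derivable_pt_lim_plus f g)
  | |- derivable_pt_lim (fun s => @?f s - @?g s) _ _ => apply (derivable_pt_lim_minus f g)
  | |- derivable_pt_lim (fun s => @?f s ^ 2) _ _ => apply (derivable_pt_lim_sqr f)
  | |- derivable_pt_lim (fun s => @?f s / ?c) _ _ => apply (derivable_pt_lim_div_const f c)
  | |- derivable_pt_lim (fun s => @?f s * @?g s) _ _ => apply (derivable_pt_lim_mult f g)
  | |- derivable_pt_lim (fun s => exp (@?f s)) _ _ =>
      apply (derivable_pt_lim_comp f exp); [| apply derivable_pt_lim_exp]
  | |- derivable_pt_lim (fun s => ln (@?f s)) _ _ =>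
      apply (derivable_pt_lim_comp f ln); [| apply derivable_pt_lim_ln]
  | H : derivable_pt_lim _ _ _ |- _ => exact H
  end).

(* Right continuity at 0, encoded as continuity at 0 of [f] frozen on [(-oo, 0]]
   so that the algebra of [continuity_pt] applies. *)
Definition right_cont0 (f : R -> R) : Prop := continuity_pt (fun t => f (Rmax 0 t)) 0.

Lemma right_cont0_intro f :
  (forall eps, 0 < eps -> exists del, 0 < del /\
     forall t, 0 <= t < del -> Rabs (f t - f 0) < eps) -> right_cont0 f.
Proof.
  intros Hf eps Heps. destruct (Hf eps Heps) as [del [Hdel Hnear]].
  exists del; split; [lra |]. intros t [_ Ht]. simpl in *. unfold R_dist in *.
  rewrite Rminus_0_r in Ht. rewrite Rmax_left with (x := 0) (y := 0) by lra.
  apply Hnear. split; [apply Rmax_l |].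
  apply Rmax_lub_lt; [lra |]. apply Rabs_def2 in Ht. lra.
Qed.

Lemma right_cont0_elim f : right_cont0 f ->
  forall eps, 0 < eps -> exists del, 0 < del /\
    forall t, 0 <= t < del -> Rabs (f t - f 0) < eps.
Proof.
  intros Hf eps Heps. destruct (continuity_pt_eps _ _ Hf eps Heps) as [del [Hdel Hnear]].
  exists del; split; [exact Hdel |]. intros t Ht.
  specialize (Hnear t ltac:(rewrite Rminus_0_r, Rabs_right; lra)).
  now rewrite !Rmax_right in Hnear by lra.
Qed.

Lemma right_cont0_of_continuity f : continuity_pt f 0 -> right_cont0 f.
Proof.
  intro Hf. apply right_cont0_intro. intros eps Heps.
  destruct (continuity_pt_eps _ _ Hf eps Heps) as [del [Hdel Hnear]].
  exists del; split; [exact Hdel |]. intros t Ht.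
  apply Hnear. rewrite Rminus_0_r, Rabs_right; lra.
Qed.

Lemma right_cont0_const c : right_cont0 (fun _ => c).
Proof. apply continuity_pt_const. now intros u v. Qed.

Lemma right_cont0_plus f g : right_cont0 f -> right_cont0 g -> right_cont0 (fun t => f t + g t).
Proof. exact (continuity_pt_plus _ _ 0). Qed.

Lemma right_cont0_minus f g : right_cont0 f -> right_cont0 g -> right_cont0 (fun t => f t - g t).
Proof. exact (continuity_pt_minus _ _ 0). Qed.

Lemma right_cont0_mult f g : right_cont0 f -> right_cont0 g -> right_cont0 (fun t => f t * g t).
Proof. exact (continuity_pt_mult _ _ 0). Qed.

Lemma right_cont0_sqr f : right_cont0 f -> right_cont0 (fun t => f t ^ 2).
Proof.
  intro Hf. apply (continuity_pt_locally_ext (fun t => f (Rmax 0 t) * f (Rmax 0 t)) _ 1);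
    [lra | intros; cbv beta; ring | exact (continuity_pt_mult _ _ 0 Hf Hf)].
Qed.

Ltac right_cont :=
  repeat (cbv beta; match goal with
  | |- right_cont0 (fun _ => ?c) => apply (right_cont0_const c)
  | |- right_cont0 (fun t => @?f t + @?g t) => apply (right_cont0_plus f g)
  | |- right_cont0 (fun t => @?f t - @?g t) => apply (right_cont0_minus f g)
  | |- right_cont0 (fun t => @?f t * @?g t) => apply (right_cont0_mult f g)
  | |- right_cont0 (fun t => @?f t ^ 2) => apply (right_cont0_sqr f)
  end); try assumption.

Lemma right_cont0_pos f : right_cont0 f -> 0 < f 0 ->
  exists h, 0 < h /\ forall t, 0 <= t < h -> 0 < f t.
Proof.
  intros Hf Hpos. destruct (right_cont0_elim f Hf (f 0) Hpos) as [h [Hh Hnear]].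
  exists h; split; [exact Hh |]. intros t Ht. destruct (Rabs_def2 _ _ (Hnear t Ht)). lra.
Qed.

Lemma right_cont0_lt_of_deriv_pos f f' h : right_cont0 f ->
  (forall t, 0 < t < h -> derivable_pt_lim f t (f' t)) ->
  (forall t, 0 < t < h -> 0 < f' t) -> forall t, 0 < t < h -> f 0 < f t.
Proof.
  intros Hf Hd Hpos t Ht.
  assert (Hmid : f (t / 2) < f t).
  { destruct (MVT_cor2 f f' (t / 2) t ltac:(lra)) as [c [Hmvt Hc]].
    - intros c Hc. apply Hd. lra.
    - assert (0 < f' c) by (apply Hpos; lra). nra. }
  enough (f 0 <= f (t / 2)) by lra.
  apply Rnot_lt_le; intro Hlt.
  destruct (right_cont0_elim f Hf (f 0 - f (t / 2)) ltac:(lra)) as [del [Hdel Hnear]].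
  set (s := Rmin (del / 2) (t / 2)).
  assert (0 < s) by (apply Rmin_pos; lra).
  assert (s <= del / 2) by apply Rmin_l.
  assert (s <= t / 2) by apply Rmin_r.
  destruct (Rabs_def2 _ _ (Hnear s ltac:(lra))).
  enough (0 * (t / 2 - s) <= f (t / 2) - f s) by lra.
  apply (diff_ge_of_deriv_ge f f'); [lra | intros c Hc; apply Hd; lra |].
  intros c Hc. left. apply Hpos. lra.
Qed.

Lemma right_cont0_eventually_pos f f' : right_cont0 f -> right_cont0 f' ->
  (forall t, 0 < t -> derivable_pt_lim f t (f' t)) ->
  0 <= f 0 -> (f 0 = 0 -> 0 < f' 0) ->
  exists h, 0 < h /\ forall t, 0 < t < h -> 0 < f t.
Proof.
  intros Hf Hf' Hd H0 Hslope. destruct (Rle_lt_or_eq_dec _ _ H0) as [Hpos | Hzero].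
  - destruct (right_cont0_pos f Hf Hpos) as [h [Hh Hnear]].
    exists h; split; [exact Hh |]. intros t Ht. apply Hnear. lra.
  - destruct (right_cont0_pos f' Hf' (Hslope (eq_sym Hzero))) as [h [Hh Hnear]].
    exists h; split; [exact Hh |]. intros t Ht. rewrite Hzero.
    apply (right_cont0_lt_of_deriv_pos f f' h Hf); [intros u Hu; apply Hd | intros u Hu; apply Hnear | ]; lra.
Qed.

Lemma pos_of_linear_ode f a k h : right_cont0 f -> 0 <= f 0 ->
  (forall t, 0 < t < h -> derivable_pt_lim f t (a t - k * f t)) ->
  (forall t, 0 < t < h -> 0 < a t) -> forall t, 0 < t < h -> 0 < f t.
Proof.
  intros Hf H0 Hd Ha t Ht.
  assert (Hexp : forall u, derivable_pt_lim (fun s => exp (k * s)) u (exp (k * u) * k))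
    by (intro u; eapply derivable_pt_lim_value; [derive | ring]).
  assert (Hgrow : f 0 * exp (k * 0) < f t * exp (k * t)).
  { apply (right_cont0_lt_of_deriv_pos (fun s => f s * exp (k * s)) (fun s => a s * exp (k * s)) h);
      [| | | exact Ht].
    - apply right_cont0_mult; [exact Hf |].
      apply right_cont0_of_continuity, (continuity_pt_of_deriv _ _ _ (Hexp 0)).
    - intros u Hu. eapply derivable_pt_lim_value.
      + apply (derivable_pt_lim_mult f); [apply Hd, Hu | apply Hexp].
      + cbv beta; ring.
    - intros u Hu. apply Rmult_lt_0_compat; [apply Ha, Hu | apply exp_pos]. }
  rewrite Rmult_0_r, exp_0, Rmult_1_r in Hgrow.
  pose proof (exp_pos (k * t)). nra.
Qed.

Lemma real_induction (P : R -> Prop) a : P a ->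
  (forall t, a < t -> (forall s, a <= s < t -> P s) -> P t) ->
  (forall t, a <= t -> P t -> exists h, 0 < h /\ forall s, t <= s < t + h -> P s) ->
  forall t, a <= t -> P t.
Proof.
  intros Ha Hclosed Hopen t1 Ht1. apply NNPP; intro Hfail.
  set (E u := a <= u <= t1 /\ forall s, a <= s <= u -> P s).
  assert (HEa : E a) by (split; [lra | intros s Hs; replace s with a by lra; exact Ha]).
  destruct (completeness E) as [tau [Hub Hlub]];
    [exists t1; intros u [Hu _]; lra | exists a; exact HEa |].
  assert (Hatau : a <= tau) by (apply Hub, HEa).
  assert (Htau1 : tau <= t1) by (apply Hlub; intros u [Hu _]; lra).
  assert (Hbefore : forall s, a <= s < tau -> P s).
  { intros s Hs. apply NNPP; intro Ns.
    enough (tau <= s) by lra. apply Hlub. intros u [_ Hu].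
    apply Rnot_lt_le; intro Hsu. apply Ns, Hu. lra. }
  assert (Hupto : forall s, a <= s <= tau -> P s).
  { intros s Hs. destruct (Req_dec s tau) as [-> | Hne]; [| apply Hbefore; lra].
    destruct (Req_dec tau a) as [-> | Hne']; [exact Ha |]. apply Hclosed; [lra | exact Hbefore]. }
  destruct (Req_dec tau t1) as [<- | Hlt]; [apply Hfail, Hupto; lra |].
  destruct (Hopen tau Hatau (Hupto tau ltac:(lra))) as [h [Hh Hafter]].
  set (u := Rmin (tau + h / 2) t1).
  assert (u <= tau + h / 2) by apply Rmin_l.
  assert (u <= t1) by apply Rmin_r.
  assert (tau < u) by (apply Rmin_glb_lt; lra).
  enough (E u) by (assert (u <= tau) by (apply Hub; assumption); lra).
  split; [lra |]. intros s Hs. destruct (Rle_lt_dec s tau); [apply Hupto | apply Hafter]; lra.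
Qed.

(** * Behaviour at infinity *)

Definition vanishes_at_infty (f : R -> R) : Prop :=
  forall eps, 0 < eps -> exists T, forall t, T <= t -> Rabs (f t) < eps.

Definition cauchy_at_infty (f : R -> R) : Prop :=
  forall eps, 0 < eps -> exists T, forall s t, T <= s -> T <= t -> Rabs (f s - f t) < eps.

Definition bounded_from (a : R) (f : R -> R) : Prop :=
  exists K, forall t, a <= t -> Rabs (f t) <= K.

Lemma cauchy_at_infty_of_vanishes f l :
  vanishes_at_infty (fun t => f t - l) -> cauchy_at_infty f.
Proof.
  intros Hf eps Heps. destruct (Hf (eps / 2) ltac:(lra)) as [T HT].
  exists T. intros s t Hs Ht. specialize (HT s Hs) as Hs'. specialize (HT t Ht).
  replace (f s - f t) with ((f s - l) - (f t - l)) by ring.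
  eapply Rle_lt_trans; [apply Rabs_triang |]. rewrite Rabs_Ropp. lra.
Qed.

Lemma cauchy_at_infty_of_nonincreasing f a lb :
  (forall s t, a <= s <= t -> f t <= f s) -> (forall t, a <= t -> lb <= f t) ->
  cauchy_at_infty f.
Proof.
  intros Hdecr Hlb eps Heps.
  set (E y := exists t, a <= t /\ y = - f t).
  destruct (completeness E) as [M [Hub Hlub]].
  - exists (- lb). intros y [t [Ht ->]]. specialize (Hlb t Ht). lra.
  - exists (- f a), a. split; [lra | reflexivity].
  - assert (Hnear : exists t0, a <= t0 /\ M - eps < - f t0).
    { apply NNPP; intro Hno. enough (M <= M - eps) by lra.
      apply Hlub. intros y [t [Ht ->]]. apply Rnot_lt_le; intro Hlt. apply Hno. now exists t. }
    destruct Hnear as [t0 [Ht0 Hclose]]. exists t0. intros s t Hs Ht.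
    assert (- f s <= M) by (apply Hub; exists s; split; [lra | reflexivity]).
    assert (- f t <= M) by (apply Hub; exists t; split; [lra | reflexivity]).
    assert (f s <= f t0) by (apply Hdecr; lra).
    assert (f t <= f t0) by (apply Hdecr; lra).
    apply Rabs_def1; lra.
Qed.

Lemma vanishes_eventually_eq a f g : (forall t, a <= t -> f t = g t) ->
  vanishes_at_infty f -> vanishes_at_infty g.
Proof.
  intros Heq Hf eps Heps. destruct (Hf eps Heps) as [T HT]. exists (Rmax a T).
  intros t Ht. rewrite <- Heq by (pose proof (Rmax_l a T); lra).
  apply HT. pose proof (Rmax_r a T). lra.
Qed.

Lemma vanishes_le a f g : (forall t, a <= t -> Rabs (g t) <= Rabs (f t)) ->
  vanishes_at_infty f -> vanishes_at_infty g.
Proof.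
  intros Hle Hf eps Heps. destruct (Hf eps Heps) as [T HT]. exists (Rmax a T).
  intros t Ht. eapply Rle_lt_trans; [apply Hle | apply HT];
    [pose proof (Rmax_l a T) | pose proof (Rmax_r a T)]; lra.
Qed.

Lemma vanishes_plus f g : vanishes_at_infty f -> vanishes_at_infty g ->
  vanishes_at_infty (fun t => f t + g t).
Proof.
  intros Hf Hg eps Heps.
  destruct (Hf (eps / 2) ltac:(lra)) as [T1 H1]. destruct (Hg (eps / 2) ltac:(lra)) as [T2 H2].
  exists (Rmax T1 T2). intros t Ht.
  specialize (H1 t ltac:(pose proof (Rmax_l T1 T2); lra)).
  specialize (H2 t ltac:(pose proof (Rmax_r T1 T2); lra)).
  eapply Rle_lt_trans; [apply Rabs_triang | lra].
Qed.

Lemma vanishes_mult_bounded a f g : bounded_from a g -> vanishes_at_infty f ->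
  vanishes_at_infty (fun t => g t * f t).
Proof.
  intros [K HK] Hf eps Heps.
  assert (HK0 : 0 <= K) by (pose proof (Rabs_pos (g a)); specialize (HK a (Rle_refl a)); lra).
  destruct (Hf (eps / (K + 1)) ltac:(apply Rdiv_lt_0_compat; lra)) as [T HT].
  exists (Rmax a T). intros t Ht.
  specialize (HK t ltac:(pose proof (Rmax_l a T); lra)).
  specialize (HT t ltac:(pose proof (Rmax_r a T); lra)).
  rewrite Rabs_mult. pose proof (Rabs_pos (f t)).
  apply Rle_lt_trans with ((K + 1) * Rabs (f t)); [apply Rmult_le_compat_r; lra |].
  replace eps with ((K + 1) * (eps / (K + 1))) by (field; lra).
  apply Rmult_lt_compat_l; lra.
Qed.

Lemma vanishes_scal c f : vanishes_at_infty f -> vanishes_at_infty (fun t => c * f t).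
Proof. apply (vanishes_mult_bounded 0 f (fun _ => c)). exists (Rabs c). intros; lra. Qed.

Lemma vanishes_sqr f : vanishes_at_infty (fun t => f t ^ 2) -> vanishes_at_infty f.
Proof.
  intros Hf eps Heps. destruct (Hf (eps ^ 2) ltac:(nra)) as [T HT]. exists T. intros t Ht.
  specialize (HT t Ht). rewrite <- RPow_abs in HT.
  pose proof (Rabs_pos (f t)). apply Rnot_le_lt; intro Hle.
  assert (eps ^ 2 <= Rabs (f t) ^ 2) by (apply pow_incr; lra). lra.
Qed.

Lemma bounded_from_const a c : bounded_from a (fun _ => c).
Proof. exists (Rabs c). intros; lra. Qed.

Lemma bounded_from_plus a f g : bounded_from a f -> bounded_from a g ->
  bounded_from a (fun t => f t + g t).
Proof.
  intros [K1 H1] [K2 H2]. exists (K1 + K2). intros t Ht.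
  specialize (H1 t Ht). specialize (H2 t Ht). eapply Rle_trans; [apply Rabs_triang | lra].
Qed.

Lemma bounded_from_opp a f : bounded_from a f -> bounded_from a (fun t => - f t).
Proof. intros [K HK]. exists K. intros t Ht. rewrite Rabs_Ropp. auto. Qed.

Lemma bounded_from_minus a f g : bounded_from a f -> bounded_from a g ->
  bounded_from a (fun t => f t - g t).
Proof. intros Hf Hg. apply (bounded_from_plus a f (fun t => - g t) Hf (bounded_from_opp a g Hg)). Qed.

Lemma bounded_from_mult a f g : bounded_from a f -> bounded_from a g ->
  bounded_from a (fun t => f t * g t).
Proof.
  intros [K1 H1] [K2 H2]. exists (K1 * K2). intros t Ht.
  specialize (H1 t Ht). specialize (H2 t Ht). rewrite Rabs_mult.
  apply Rmult_le_compat; auto using Rabs_pos.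
Qed.

Lemma bounded_from_sqr a f : bounded_from a f -> bounded_from a (fun t => f t ^ 2).
Proof.
  intro Hf. destruct (bounded_from_mult a f f Hf Hf) as [K HK].
  exists K. intros t Ht. rewrite <- Rsqr_pow2. apply HK, Ht.
Qed.

Ltac bounded :=
  repeat (cbv beta; match goal with
  | |- bounded_from _ (fun _ => ?c) => apply bounded_from_const
  | |- bounded_from ?a (fun t => @?f t + @?g t) => apply (bounded_from_plus a f g)
  | |- bounded_from ?a (fun t => @?f t - @?g t) => apply (bounded_from_minus a f g)
  | |- bounded_from ?a (fun t => - @?f t) => apply (bounded_from_opp a f)
  | |- bounded_from ?a (fun t => @?f t * @?g t) => apply (bounded_from_mult a f g)
  | |- bounded_from ?a (fun t => @?f t / ?c) => apply (bounded_from_mult a f (fun _ => / c))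
  | |- bounded_from ?a (fun t => @?f t ^ 2) => apply (bounded_from_sqr a f)
  end); try assumption.

Lemma increment_ge_of_bump F v g dg a K eps del t :
  (forall s, a <= s -> derivable_pt_lim F s (v s)) -> (forall s, a <= s -> g s <= v s) ->
  (forall s, a <= s -> derivable_pt_lim g s (dg s)) -> (forall s, a <= s -> Rabs (dg s) <= K) ->
  0 <= del -> K * del <= eps / 2 -> a <= t -> eps <= g t ->
  eps / 2 * del <= F (t + del) - F t.
Proof.
  intros HF Hgv Hg HK Hdel HKdel Ht Hbump.
  replace del with (t + del - t) at 1 by ring.
  apply (diff_ge_of_deriv_ge F v); [lra | intros s Hs; apply HF; lra |].
  intros s Hs.
  assert (Hclose : Rabs (g s - g t) <= K * (s - t)).
  { apply (Rabs_diff_le_of_deriv g dg); [lra | intros c Hc; apply Hg; lra |].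
    intros c Hc. apply HK. lra. }
  assert (0 <= K) by (pose proof (Rabs_pos (dg a)); specialize (HK a (Rle_refl a)); lra).
  assert (K * (s - t) <= K * del) by (apply Rmult_le_compat_l; lra).
  apply Rabs_le_inv in Hclose. specialize (Hgv s ltac:(lra)). lra.
Qed.

Lemma barbalat_deriv F h dh a :
  (forall t, a <= t -> derivable_pt_lim F t (h t)) ->
  (forall t, a <= t -> derivable_pt_lim h t (dh t)) ->
  bounded_from a dh -> cauchy_at_infty F -> vanishes_at_infty h.
Proof.
  intros HF Hh [K HK] HC eps Heps.
  assert (HK0 : 0 <= K) by (pose proof (Rabs_pos (dh a)); specialize (HK a (Rle_refl a)); lra).
  set (del := eps / (2 * (K + 1))).
  assert (Hdel : 0 < del) by (apply Rdiv_lt_0_compat; lra).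
  assert (HKdel : K * del <= eps / 2) by (assert ((K + 1) * del = eps / 2) by (unfold del; field; lra); nra).
  destruct (HC (eps / 2 * del) ltac:(positivity)) as [T HT].
  exists (Rmax a T). intros t Ht. pose proof (Rmax_l a T). pose proof (Rmax_r a T).
  destruct (Rabs_def2 _ _ (HT (t + del) t ltac:(lra) ltac:(lra))).
  apply Rnot_le_lt; intro Hbig. destruct (Rle_or_lt 0 (h t)).
  - rewrite Rabs_right in Hbig by lra.
    pose proof (increment_ge_of_bump F h h dh a K eps del t HF (fun s _ => Rle_refl _) Hh HK); lra.
  - rewrite Rabs_left in Hbig by lra.
    assert (eps / 2 * del <= - F (t + del) - - F t); [| lra].
    apply (increment_ge_of_bump (fun s => - F s) (fun s => - h s) (fun s => - h s) (fun s => - dh s) a K);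
      try lra; intros s Hs.
    + apply derivable_pt_lim_opp, HF, Hs.
    + lra.
    + apply derivable_pt_lim_opp, Hh, Hs.
    + rewrite Rabs_Ropp. apply HK, Hs.
Qed.

Lemma barbalat_dissipation V v G dG a c : 0 < c ->
  (forall t, a <= t -> derivable_pt_lim V t (v t)) -> (forall t, a <= t -> v t <= - c * G t) ->
  (forall t, a <= t -> 0 <= G t) -> (forall t, a <= t -> derivable_pt_lim G t (dG t)) ->
  bounded_from a dG -> cauchy_at_infty V -> vanishes_at_infty G.
Proof.
  intros Hc HV Hv HG0 HG [K HK] HC eps Heps.
  assert (HK0 : 0 <= K) by (pose proof (Rabs_pos (dG a)); specialize (HK a (Rle_refl a)); lra).
  set (del := c * eps / (2 * (c * K + 1))).
  assert (Hdel : 0 < del) by (apply Rdiv_lt_0_compat; nra).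
  assert (HKdel : c * K * del <= c * eps / 2)
    by (assert ((c * K + 1) * del = c * eps / 2) by (unfold del; field; nra); nra).
  destruct (HC (c * eps / 2 * del) ltac:(positivity)) as [T HT].
  exists (Rmax a T). intros t Ht. pose proof (Rmax_l a T). pose proof (Rmax_r a T).
  destruct (Rabs_def2 _ _ (HT (t + del) t ltac:(lra) ltac:(lra))).
  rewrite Rabs_right by (apply Rle_ge, HG0; lra).
  apply Rnot_le_lt; intro Hbig.
  assert (c * eps / 2 * del <= - V (t + del) - - V t); [| lra].
  apply (increment_ge_of_bump (fun s => - V s) (fun s => - v s) (fun s => c * G s)
           (fun s => c * dG s) a (c * K)); try lra; try intros s Hs.
  - apply derivable_pt_lim_opp, HV, Hs.
  - specialize (Hv s Hs). lra.
  - apply derivable_pt_lim_scal, HG, Hs.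
  - rewrite Rabs_mult, Rabs_right by lra. apply Rmult_le_compat_l; [lra | apply HK, Hs].
  - apply Rmult_le_compat_l; lra.
Qed.

Lemma le_exp_decay u du a k :
  (forall t, a <= t -> derivable_pt_lim u t (du t)) -> (forall t, a <= t -> du t <= - k * u t) ->
  forall t, a <= t -> u t <= u a * exp (- k * (t - a)).
Proof.
  intros Hu Hdu t Ht.
  assert (Hdecr : u t * exp (k * (t - a)) - u a * exp (k * (a - a)) <= 0 * (t - a)).
  { apply (diff_le_of_deriv_le (fun s => u s * exp (k * (s - a)))
             (fun s => (du s + k * u s) * exp (k * (s - a)))); [lra | |].
    - intros c Hc. pose proof (Hu c ltac:(lra)).
      eapply derivable_pt_lim_value; [derive | cbv beta; ring].
    - intros c Hc. specialize (Hdu c ltac:(lra)). pose proof (exp_pos (k * (c - a))). nra. }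
  rewrite Rminus_diag, Rmult_0_r, exp_0, Rmult_1_r, Rmult_0_l in Hdecr.
  assert (Hinv : exp (k * (t - a)) * exp (- k * (t - a)) = 1).
  { rewrite <- exp_plus, <- exp_0. f_equal. ring. }
  pose proof (exp_pos (- k * (t - a))).
  replace (u t) with (u t * exp (k * (t - a)) * exp (- k * (t - a))) by (rewrite Rmult_assoc, Hinv; ring).
  apply Rmult_le_compat_r; lra.
Qed.

Lemma exp_le_1 x : x <= 0 -> exp x <= 1.
Proof.
  intro Hx. rewrite <- exp_0. destruct (Rle_lt_or_eq_dec _ _ Hx) as [Hlt | ->];
    [left; apply exp_increasing, Hlt | lra].
Qed.

Lemma linear_ode_bound e r a k rho : 0 < k ->
  (forall t, a <= t -> derivable_pt_lim e t (r t - k * e t)) ->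
  (forall t, a <= t -> Rabs (r t) <= rho) ->
  forall t, a <= t -> Rabs (e t) <= rho / k + Rabs (e a) * exp (- k * (t - a)).
Proof.
  intros Hk He Hr t Ht.
  assert (Hrho : 0 <= rho / k)
    by (pose proof (Rabs_pos (r a)); specialize (Hr a (Rle_refl a));
        apply Rmult_le_pos; [lra | left; positivity]).
  assert (Hup : e t - rho / k <= (e a - rho / k) * exp (- k * (t - a))).
  { apply (le_exp_decay (fun s => e s - rho / k) (fun s => r s - k * e s)); [| | exact Ht].
    - intros s Hs. pose proof (He s Hs). eapply derivable_pt_lim_value; [derive | ring].
    - intros s Hs. pose proof (Rabs_le_inv _ _ (Hr s Hs)).
      replace (- k * (e s - rho / k)) with (rho - k * e s) by (field; lra). lra. }
  assert (Hlo : - e t - rho / k <= (- e a - rho / k) * exp (- k * (t - a))).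
  { apply (le_exp_decay (fun s => - e s - rho / k) (fun s => - (r s - k * e s))); [| | exact Ht].
    - intros s Hs. pose proof (He s Hs). eapply derivable_pt_lim_value.
      + apply derivable_pt_lim_minus; [apply derivable_pt_lim_opp; eassumption | apply derivable_pt_lim_const].
      + ring.
    - intros s Hs. pose proof (Rabs_le_inv _ _ (Hr s Hs)).
      replace (- k * (- e s - rho / k)) with (rho + k * e s) by (field; lra). lra. }
  pose proof (exp_pos (- k * (t - a))). pose proof (Rabs_le_inv _ _ (Rle_refl (Rabs (e a)))).
  apply Rabs_le. split; nra.
Qed.

Lemma exp_neg_mul_le x : exp (- x) * (1 + x) <= 1.
Proof.
  apply Rle_trans with (exp (- x) * exp x).
  - apply Rmult_le_compat_l; [left; apply exp_pos | apply exp_ineq1_le].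
  - rewrite <- exp_plus, Rplus_opp_l, exp_0. lra.
Qed.

Lemma linear_ode_vanishes e r a k : 0 < k ->
  (forall t, a <= t -> derivable_pt_lim e t (r t - k * e t)) ->
  vanishes_at_infty r -> vanishes_at_infty e.
Proof.
  intros Hk He Hr eps Heps.
  destruct (Hr (k * eps / 2) ltac:(positivity)) as [T HT].
  pose proof (Rmax_l a T). pose proof (Rmax_r a T). set (b := Rmax a T) in *.
  assert (Hbound := linear_ode_bound e r b k (k * eps / 2) Hk
    ltac:(intros t Ht; apply He; lra) ltac:(intros t Ht; apply Rlt_le, HT; lra)).
  pose proof (Rabs_pos (e b)). set (B := Rabs (e b)) in *.
  exists (b + 2 * B / (k * eps)). intros t Ht.
  assert (0 <= 2 * B / (k * eps)) by (apply Rmult_le_pos; [lra | left; positivity]).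
  specialize (Hbound t ltac:(lra)).
  replace (k * eps / 2 / k) with (eps / 2) in Hbound by (field; lra).
  set (x := k * (t - b)).
  assert (Hx : 2 * B / eps <= x).
  { unfold x. replace (2 * B / eps) with (k * (2 * B / (k * eps))) by (field; lra).
    apply Rmult_le_compat_l; lra. }
  assert (Hx0 : 0 <= x)
    by (apply Rle_trans with (2 * B / eps); [apply Rmult_le_pos; [lra | left; positivity] | exact Hx]).
  assert (Hdecay : B * exp (- x) * (1 + x) <= B).
  { rewrite Rmult_assoc. pose proof (exp_neg_mul_le x). 
    apply Rle_trans with (B * 1); [apply Rmult_le_compat_l | ]; lra. }
  assert (Hlarge : B < eps / 2 * (1 + x)).
  { assert (eps / 2 * (2 * B / eps) <= eps / 2 * x) by (apply Rmult_le_compat_l; lra).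
    replace (eps / 2 * (2 * B / eps)) with B in * by (field; lra). lra. }
  replace (- k * (t - b)) with (- x) in Hbound by (unfold x; ring).
  enough (B * exp (- x) < eps / 2) by lra.
  apply Rnot_le_lt; intro Hbig.
  assert (eps / 2 * (1 + x) <= B * exp (- x) * (1 + x)) by (apply Rmult_le_compat_r; lra).
  lra.
Qed.

(** * The Volterra function *)

Definition volterra (u : R) : R := u - 1 - ln u.

Lemma ln_le_sub1 u : 0 < u -> ln u <= u - 1.
Proof. intro Hu. pose proof (exp_ineq1_le (ln u)). rewrite exp_ln in H by exact Hu. lra. Qed.

Lemma ln_ge_1_sub_inv u : 0 < u -> 1 - / u <= ln u.
Proof.
  intro Hu. pose proof (ln_le_sub1 (/ u) ltac:(positivity)).
  rewrite ln_Rinv in H by exact Hu. lra.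
Qed.

Lemma volterra_nonneg u : 0 < u -> 0 <= volterra u.
Proof. intro Hu. pose proof (ln_le_sub1 u Hu). unfold volterra. lra. Qed.

Lemma volterra_pos u : 0 < u -> u <> 1 -> 0 < volterra u.
Proof.
  intros Hu Hne. assert (Hln : ln u <> 0) by (intro H0; apply Hne; rewrite <- (exp_ln u Hu), H0; apply exp_0).
  pose proof (exp_ineq1 (ln u) Hln). rewrite exp_ln in H by exact Hu. unfold volterra. lra.
Qed.

Lemma volterra_le_sqr u : 1 / 2 <= u -> volterra u <= 2 * (u - 1) ^ 2.
Proof.
  intro Hu. pose proof (ln_ge_1_sub_inv u ltac:(lra)).
  assert (volterra u <= (u - 1) ^ 2 / u).
  { unfold volterra. replace ((u - 1) ^ 2 / u) with (u - 1 - (1 - / u)) by (field; lra). lra. }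
  enough ((u - 1) ^ 2 / u <= 2 * (u - 1) ^ 2) by lra.
  apply Rmult_le_reg_r with u; [lra |].
  replace ((u - 1) ^ 2 / u * u) with ((u - 1) ^ 2) by (field; lra).
  pose proof (pow2_ge_0 (u - 1)). nra.
Qed.

Lemma le_of_volterra_le u K : 0 < u -> volterra u <= K -> u <= 2 * (K + 1).
Proof.
  intros Hu HK. unfold volterra in HK.
  assert (Hs : 0 < sqrt u) by (apply sqrt_lt_R0, Hu).
  assert (Hln : ln u = 2 * ln (sqrt u)).
  { rewrite <- (sqrt_sqrt u) at 1 by lra. rewrite ln_mult by exact Hs. ring. }
  pose proof (ln_le_sub1 (sqrt u) Hs). pose proof (sqrt_sqrt u ltac:(lra)).
  pose proof (pow2_ge_0 (sqrt u - 2)). nra.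
Qed.

Lemma ge_of_volterra_le u K : 0 < u -> volterra u <= K -> exp (- (K + 1)) <= u.
Proof.
  intros Hu HK. unfold volterra in HK. rewrite <- (exp_ln u Hu).
  destruct (Rle_lt_or_eq_dec (- (K + 1)) (ln u)) as [Hlt | ->]; [lra | | lra].
  left. apply exp_increasing, Hlt.
Qed.

Lemma volterra_le_ge1 u v : 1 <= u <= v -> volterra u <= volterra v.
Proof.
  intros Huv. unfold volterra.
  assert (Hln : ln v = ln u + ln (v / u)) by (rewrite <- ln_mult by positivity; f_equal; field; lra).
  pose proof (ln_le_sub1 (v / u) ltac:(positivity)).
  assert (u * (v / u - 1) = v - u) by (field; lra).
  assert (0 <= v / u - 1) by (apply Rmult_le_reg_l with u; [lra | nra]).
  nra.
Qed.

Lemma volterra_le_le1 u v : 0 < u <= v -> v <= 1 -> volterra v <= volterra u.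
Proof.
  intros Huv Hv. unfold volterra.
  assert (Hln : ln u = ln v + ln (u / v)) by (rewrite <- ln_mult by positivity; f_equal; field; lra).
  pose proof (ln_le_sub1 (u / v) ltac:(positivity)).
  assert (v * (u / v - 1) = u - v) by (field; lra).
  assert (u / v - 1 <= 0) by (apply Rmult_le_reg_l with v; [lra | nra]).
  nra.
Qed.

Lemma Rabs_sub1_lt_of_volterra_lt r u : 0 < r < 1 -> 0 < u ->
  volterra u < Rmin (volterra (1 - r)) (volterra (1 + r)) -> Rabs (u - 1) < r.
Proof.
  intros Hr Hu Hlt. pose proof (Rmin_l (volterra (1 - r)) (volterra (1 + r))).
  pose proof (Rmin_r (volterra (1 - r)) (volterra (1 + r))).
  apply Rabs_def1; apply Rnot_le_lt; intro Hfar.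
  - pose proof (volterra_le_ge1 (1 + r) u ltac:(lra)). lra.
  - pose proof (volterra_le_le1 u (1 - r) ltac:(lra) ltac:(lra)). lra.
Qed.

Lemma AM_GM3 a b c : 0 < a -> 0 < b -> 0 < c -> a * b * c = 1 -> 3 <= a + b + c.
Proof.
  intros Ha Hb Hc Habc.
  pose proof (ln_le_sub1 a Ha). pose proof (ln_le_sub1 b Hb). pose proof (ln_le_sub1 c Hc).
  assert (ln a + ln b + ln c = 0) by (rewrite <- !ln_mult, Habc by positivity; apply ln_1).
  lra.
Qed.

Lemma bounds_of_volterra_le w b u V : 0 < w -> 0 < b -> 0 < u -> w * volterra (u / b) <= V ->
  b * exp (- (V / w + 1)) <= u <= b * (2 * (V / w + 1)).
Proof.
  intros Hw Hb Hu HV.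
  assert (HK : volterra (u / b) <= V / w)
    by (apply Rmult_le_reg_l with w; [exact Hw | replace (w * (V / w)) with V by (field; lra); exact HV]).
  assert (Hub : 0 < u / b) by positivity.
  pose proof (ge_of_volterra_le _ _ Hub HK). pose proof (le_of_volterra_le _ _ Hub HK).
  replace u with (b * (u / b)) by (field; lra).
  split; apply Rmult_le_compat_l; lra.
Qed.

Lemma volterra_le_of_near w b u d : 0 < w -> 0 < b -> Rabs (u - b) <= d -> d <= b / 2 ->
  w * volterra (u / b) <= w / b * d.
Proof.
  intros Hw Hb Hd Hdb. pose proof (Rabs_pos (u - b)). apply Rabs_le_inv in Hd.
  assert (Hhalf : 1 / 2 <= u / b) by (apply Rmult_le_reg_r with b; [exact Hb | field_simplify; lra]).
  pose proof (volterra_le_sqr _ Hhalf).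
  assert ((u - b) ^ 2 <= d * (b / 2)) by nra.
  assert (2 * (u / b - 1) ^ 2 <= d / b).
  { replace (2 * (u / b - 1) ^ 2) with ((u - b) ^ 2 / (b / 2) / b) by (field; lra).
    apply Rmult_le_compat_r; [left; positivity |].
    apply Rmult_le_reg_r with (b / 2); [positivity |]. field_simplify; lra. }
  replace (w / b * d) with (w * (d / b)) by (field; lra).
  apply Rmult_le_compat_l; lra.
Qed.

Lemma near_of_volterra_lt w b u r : 0 < w -> 0 < b -> 0 < u -> 0 < r < 1 ->
  w * volterra (u / b) < w * Rmin (volterra (1 - r)) (volterra (1 + r)) -> Rabs (u - b) < r * b.
Proof.
  intros Hw Hb Hu Hr Hlt. apply Rmult_lt_reg_l in Hlt; [| exact Hw].
  pose proof (Rabs_sub1_lt_of_volterra_lt r (u / b) Hr ltac:(positivity) Hlt).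
  replace (u - b) with (b * (u / b - 1)) by (field; lra).
  rewrite Rabs_mult, Rabs_right, Rmult_comm by lra. apply Rmult_lt_compat_r; assumption.
Qed.

Lemma dist5_lt q p e : 0 < e ->
  Rabs (sS q - sS p) < e / 3 -> Rabs (sI q - sI p) < e / 3 -> Rabs (sC q - sC p) < e / 3 ->
  Rabs (sA q - sA p) < e / 3 -> Rabs (sE q - sE p) < e / 3 -> dist5 q p < e.
Proof.
  intros He H1 H2 H3 H4 H5. unfold dist5.
  assert (Hsq : forall d, Rabs d < e / 3 -> d ^ 2 < e ^ 2 / 9).
  { intros d Hd. rewrite <- pow2_abs. replace (e ^ 2 / 9) with ((e / 3) ^ 2) by field.
    pose proof (Rabs_pos d). simpl. nra. }
  rewrite <- (sqrt_pow2 e) by lra. apply sqrt_lt_1_alt. split.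
  - pose proof (pow2_ge_0 (sS q - sS p)). pose proof (pow2_ge_0 (sI q - sI p)).
    pose proof (pow2_ge_0 (sC q - sC p)). pose proof (pow2_ge_0 (sA q - sA p)).
    pose proof (pow2_ge_0 (sE q - sE p)). lra.
  - pose proof (Hsq _ H1). pose proof (Hsq _ H2). pose proof (Hsq _ H3).
    pose proof (Hsq _ H4). pose proof (Hsq _ H5). pose proof (pow_lt e 2 He). lra.
Qed.

Lemma Rabs_sub_le_dist5 q p :
  Rabs (sS q - sS p) <= dist5 q p /\ Rabs (sI q - sI p) <= dist5 q p /\
  Rabs (sC q - sC p) <= dist5 q p /\ Rabs (sA q - sA p) <= dist5 q p /\
  Rabs (sE q - sE p) <= dist5 q p.
Proof.
  unfold dist5.
  assert (Hle : forall d s, 0 <= s -> d ^ 2 <= s -> Rabs d <= sqrt s).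
  { intros d s Hs Hd. rewrite <- (sqrt_pow2 (Rabs d)) by apply Rabs_pos.
    rewrite pow2_abs. apply sqrt_le_1_alt. exact Hd. }
  pose proof (pow2_ge_0 (sS q - sS p)). pose proof (pow2_ge_0 (sI q - sI p)).
  pose proof (pow2_ge_0 (sC q - sC p)). pose proof (pow2_ge_0 (sA q - sA p)).
  pose proof (pow2_ge_0 (sE q - sE p)).
  repeat split; apply Hle; lra.
Qed.

Lemma dist5_vanishes (y : R -> State) p :
  vanishes_at_infty (fun t => sS (y t) - sS p) -> vanishes_at_infty (fun t => sI (y t) - sI p) ->
  vanishes_at_infty (fun t => sC (y t) - sC p) -> vanishes_at_infty (fun t => sA (y t) - sA p) ->
  vanishes_at_infty (fun t => sE (y t) - sE p) ->
  forall eps, 0 < eps -> exists T, forall t, T <= t -> dist5 (y t) p < eps.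
Proof.
  intros HS HI HC HA HE eps Heps.
  destruct (HS (eps / 3) ltac:(lra)) as [T1 H1]. destruct (HI (eps / 3) ltac:(lra)) as [T2 H2].
  destruct (HC (eps / 3) ltac:(lra)) as [T3 H3]. destruct (HA (eps / 3) ltac:(lra)) as [T4 H4].
  destruct (HE (eps / 3) ltac:(lra)) as [T5 H5].
  set (T := Rmax (Rmax (Rmax T1 T2) (Rmax T3 T4)) T5).
  assert (T1 <= T /\ T2 <= T /\ T3 <= T /\ T4 <= T /\ T5 <= T) as (B1 & B2 & B3 & B4 & B5).
  { unfold T. pose proof (Rmax_l T1 T2). pose proof (Rmax_r T1 T2). pose proof (Rmax_l T3 T4).
    pose proof (Rmax_r T3 T4). pose proof (Rmax_l (Rmax T1 T2) (Rmax T3 T4)).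
    pose proof (Rmax_r (Rmax T1 T2) (Rmax T3 T4)). pose proof (Rmax_l (Rmax (Rmax T1 T2) (Rmax T3 T4)) T5).
    pose proof (Rmax_r (Rmax (Rmax T1 T2) (Rmax T3 T4)) T5). repeat split; lra. }
  exists T. intros t Ht. apply dist5_lt; [lra | apply H1 | apply H2 | apply H3 | apply H4 | apply H5]; lra.
Qed.

(** * The model *)

Section Model.

Variable P : Params.

Local Notation Lam := (Defs.Lam P).
Local Notation mu := (Defs.mu P).
Local Notation beta := (Defs.beta P).
Local Notation rho := (Defs.rho P).
Local Notation phi := (Defs.phi P).
Local Notation alpha := (Defs.alpha P).
Local Notation omega := (Defs.omega P).
Local Notation psi := (Defs.psi P).
Local Notation etaC := (Defs.etaC P).
Local Notation etaA := (Defs.etaA P).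
Local Notation beta1 := (beta1 P).
Local Notation xi1 := (xi1 P).
Local Notation xi2 := (xi2 P).
Local Notation xi3 := (xi3 P).
Local Notation fS := (fS P).
Local Notation fI := (fI P).
Local Notation fC := (fC P).
Local Notation fA := (fA P).

Hypotheses (hLam : 0 < Lam) (hmu : 0 < mu) (hbeta : 0 < beta) (hrho : 0 < rho)
  (hphi : 0 < phi) (halpha : 0 < alpha) (homega : 0 < omega) (hpsi : 0 <= psi)
  (hetaC : 0 < etaC) (hetaA : 0 < etaA).
Hypothesis hR0 : repro_number P > 1.

Lemma beta1_pos : 0 < beta1.
Proof. unfold Defs.beta1. positivity. Qed.

Lemma xi1_pos : 0 < xi1.
Proof. unfold Defs.xi1. lra. Qed.

Lemma xi2_pos : 0 < xi2.
Proof. unfold Defs.xi2. lra. Qed.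

#[local] Hint Resolve hLam hmu hbeta hrho hphi halpha homega hetaC hetaA beta1_pos xi1_pos xi2_pos : core.

Definition Sbar : R :=
  mu * (xi1 * (phi + xi2) + rho * xi2) / (beta1 * (xi1 * (xi2 + etaC * phi) + etaA * rho * xi2)).

Definition kappa : R := 1 + etaC * phi / xi2 + etaA * rho / xi1.

Definition Ibar : R := (Lam - (mu + psi) * Sbar) / (beta1 * kappa * Sbar).
Definition Cbar : R := phi * Ibar / xi2.
Definition Abar : R := rho * Ibar / xi1.
Definition Ebar : R := psi * Sbar / mu.

Definition endemic : State := mkState Sbar Ibar Cbar Abar Ebar.

Lemma Sbar_pos : 0 < Sbar.
Proof. unfold Sbar. positivity. Qed.

Lemma kappa_pos : 0 < kappa.
Proof. unfold kappa. positivity. Qed.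

(* R0 is the ratio of the disease-free susceptible level Lam / (mu + psi) to Sbar. *)
Lemma repro_number_eq : repro_number P = Lam / (mu + psi) / Sbar.
Proof.
  unfold repro_number, Sbar, Defs.xi1, Defs.xi2. pose proof beta1_pos.
  field. repeat split; positivity.
Qed.

Lemma Sbar_lt : (mu + psi) * Sbar < Lam.
Proof.
  pose proof Sbar_pos. rewrite repro_number_eq in hR0.
  apply Rmult_lt_reg_r with (/ ((mu + psi) * Sbar)); [positivity |].
  rewrite Rinv_r by positivity.
  replace (Lam * / ((mu + psi) * Sbar)) with (Lam / (mu + psi) / Sbar) by (field; split; positivity).
  lra.
Qed.

Lemma Ibar_pos : 0 < Ibar.
Proof. pose proof Sbar_lt. pose proof Sbar_pos. pose proof kappa_pos. unfold Ibar. positivity. Qed.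

Lemma Cbar_pos : 0 < Cbar.
Proof. pose proof Ibar_pos. unfold Cbar. positivity. Qed.

Lemma Abar_pos : 0 < Abar.
Proof. pose proof Ibar_pos. unfold Abar. positivity. Qed.

#[local] Hint Resolve Sbar_pos kappa_pos Ibar_pos Cbar_pos Abar_pos : core.

Lemma Sbar_balance : beta1 * kappa * Sbar = xi3 - alpha * rho / xi1 - omega * phi / xi2.
Proof.
  unfold kappa, Sbar, Defs.xi3. unfold Defs.xi1, Defs.xi2 in *.
  field. repeat split; positivity.
Qed.

Lemma endemic_equilibrium : is_equilibrium P endemic.
Proof.
  pose proof Sbar_balance.
  unfold is_equilibrium, Defs.fS, Defs.fI, Defs.fC, Defs.fA, Defs.fE, endemic; simpl.
  unfold Ebar, Cbar, Abar. repeat split.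
  - unfold Ibar, kappa. field. repeat split; positivity.
  - replace (beta1 * (Ibar + etaC * (phi * Ibar / xi2) + etaA * (rho * Ibar / xi1)) * Sbar)
      with (Ibar * (beta1 * kappa * Sbar)) by (unfold kappa; field; split; positivity).
    rewrite H. field. split; positivity.
  - field. positivity.
  - field. positivity.
  - field. positivity.
Qed.

Lemma endemic_unique q : is_equilibrium P q -> 0 < sI q -> 0 < sC q -> 0 < sA q -> q = endemic.
Proof.
  unfold is_equilibrium, Defs.fS, Defs.fI, Defs.fC, Defs.fA, Defs.fE.
  intros (HS & HI & HC & HA & HE) HIpos _ _.
  assert (Hc : sC q = phi * sI q / xi2) by (apply eq_div_of_mul_eq; [positivity | lra]).
  assert (Ha : sA q = rho * sI q / xi1) by (apply eq_div_of_mul_eq; [positivity | lra]).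
  assert (Hforce : sI q + etaC * sC q + etaA * sA q = kappa * sI q)
    by (rewrite Hc, Ha; unfold kappa; field; split; positivity).
  assert (Hs : sS q = Sbar).
  { assert (Hfac : sI q * (beta1 * kappa) * (sS q - Sbar) = 0).
    { rewrite <- HI, Hforce.
      replace (sI q * (beta1 * kappa) * (sS q - Sbar))
        with (beta1 * (kappa * sI q) * sS q - sI q * (beta1 * kappa * Sbar)) by ring.
      rewrite Sbar_balance, Hc, Ha. field. split; positivity. }
    assert (0 < sI q * (beta1 * kappa)) by positivity.
    apply Rmult_integral in Hfac as [H0 | H0]; lra. }
  assert (Hi : sI q = Ibar).
  { rewrite Hforce, Hs in HS. unfold Ibar.
    apply eq_div_of_mul_eq; [positivity | lra]. }
  destruct q as [s i c a e]. unfold endemic, Cbar, Abar, Ebar. simpl in *. subst s i.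
  f_equal; [exact Hc | exact Ha |].
  apply eq_div_of_mul_eq; [positivity | lra].
Qed.

(* The weights cancel the terms of the derivative of the Lyapunov function that are linear
   in C and in A. *)
Definition wC : R := (beta1 * etaC * Sbar + omega) / xi2.
Definition wA : R := (beta1 * etaA * Sbar + alpha) / xi1.

Lemma wC_pos : 0 < wC.
Proof. unfold wC. positivity. Qed.

Lemma wA_pos : 0 < wA.
Proof. unfold wA. positivity. Qed.

#[local] Hint Resolve wC_pos wA_pos : core.

Definition lyap (q : State) : R :=
  Sbar * volterra (sS q / Sbar) + Ibar * volterra (sI q / Ibar)
  + wC * Cbar * volterra (sC q / Cbar) + wA * Abar * volterra (sA q / Abar).

Definition lyap_dot (q : State) : R :=
  (1 - Sbar / sS q) * fS q + (1 - Ibar / sI q) * fI q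
  + wC * (1 - Cbar / sC q) * fC q + wA * (1 - Abar / sA q) * fA q.

Definition lyap_loss (q : State) : R :=
  let y := sI q / Ibar in let z := sC q / Cbar in let w := sA q / Abar in
  (mu + psi) * (sS q - Sbar) ^ 2 / sS q
  + omega * Cbar * (z - y) ^ 2 / (y * z) + alpha * Abar * (w - y) ^ 2 / (y * w).

Definition SICA_positive (q : State) : Prop := 0 < sS q /\ 0 < sI q /\ 0 < sC q /\ 0 < sA q.

Lemma lyap_dot_eq q : SICA_positive q ->
  let x := sS q / Sbar in let y := sI q / Ibar in
  let z := sC q / Cbar in let w := sA q / Abar in
  lyap_dot q = - (lyap_loss q + beta1 * Ibar * Sbar * (x + 1 / x - 2)
                  + beta1 * etaC * Cbar * Sbar * (1 / x + x * z / y + y / z - 3)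
                  + beta1 * etaA * Abar * Sbar * (1 / x + x * w / y + y / w - 3)).
Proof.
  intros (HS & HI & HC & HA) x y z w. unfold x, y, z, w, lyap_dot, lyap_loss, wC, wA.
  pose proof endemic_equilibrium as (E1 & E2 & E3 & E4 & _).
  unfold Defs.fS, Defs.fI, Defs.fC, Defs.fA in *; simpl in E1, E2, E3, E4.
  set (L := Lam) in E1 |- *. set (X3 := xi3) in E2 |- *. set (Ph := phi) in E3 |- *.
  set (Rh := rho) in E4 |- *.
  clearbody L X3 Ph Rh.
  assert (L = beta1 * (Ibar + etaC * Cbar + etaA * Abar) * Sbar + (mu + psi) * Sbar) by lra.
  assert (X3 = (beta1 * (Ibar + etaC * Cbar + etaA * Abar) * Sbar + alpha * Abar + omega * Cbar) / Ibar)
    by (apply eq_div_of_mul_eq; [positivity | lra]).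
  assert (Ph = xi2 * Cbar / Ibar) by (apply eq_div_of_mul_eq; [positivity | lra]).
  assert (Rh = xi1 * Abar / Ibar) by (apply eq_div_of_mul_eq; [positivity | lra]).
  subst L X3 Ph Rh. field. repeat split; positivity.
Qed.

Lemma lyap_loss_nonneg q : SICA_positive q -> 0 <= lyap_loss q.
Proof.
  intros (HS & HI & HC & HA). unfold lyap_loss; cbv zeta.
  assert (Hdiv : forall a b, 0 <= a -> 0 < b -> 0 <= a / b)
    by (intros a b Ha Hb; apply Rmult_le_pos; [exact Ha | left; positivity]).
  repeat apply Rplus_le_le_0_compat; apply Hdiv; try positivity;
    apply Rmult_le_pos; try (left; positivity); apply pow2_ge_0.
Qed.

Lemma lyap_dot_le q : SICA_positive q -> lyap_dot q <= - lyap_loss q.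
Proof.
  intro Hq. rewrite (lyap_dot_eq q Hq). destruct Hq as (HS & HI & HC & HA).
  set (x := sS q / Sbar). set (y := sI q / Ibar). set (z := sC q / Cbar). set (w := sA q / Abar).
  assert (0 < x) by positivity. assert (0 < y) by positivity.
  assert (0 < z) by positivity. assert (0 < w) by positivity.
  assert (3 <= x + 1 / x + 1) by (apply AM_GM3; try positivity; field; lra).
  assert (3 <= 1 / x + x * z / y + y / z) by (apply AM_GM3; try positivity; field; lra).
  assert (3 <= 1 / x + x * w / y + y / w) by (apply AM_GM3; try positivity; field; lra).
  assert (0 < beta1 * Ibar * Sbar) by positivity. assert (0 < beta1 * etaC * Cbar * Sbar) by positivity.
  assert (0 < beta1 * etaA * Abar * Sbar) by positivity.
  enough (0 <= beta1 * Ibar * Sbar * (x + 1 / x - 2)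
             + beta1 * etaC * Cbar * Sbar * (1 / x + x * z / y + y / z - 3)
             + beta1 * etaA * Abar * Sbar * (1 / x + x * w / y + y / w - 3)) by lra.
  repeat apply Rplus_le_le_0_compat; apply Rmult_le_pos; lra.
Qed.

Lemma lyap_dot_nonpos q : SICA_positive q -> lyap_dot q <= 0.
Proof. intro Hq. pose proof (lyap_dot_le q Hq). pose proof (lyap_loss_nonneg q Hq). lra. Qed.

Definition dissip (q : State) : R :=
  (sS q - Sbar) ^ 2 + (sC q / Cbar - sI q / Ibar) ^ 2 + (sA q / Abar - sI q / Ibar) ^ 2.

Lemma lyap_loss_ge_dissip M : 0 < M -> exists c, 0 < c /\ forall q, SICA_positive q ->
  sS q <= M -> sI q <= M -> sC q <= M -> sA q <= M -> c * dissip q <= lyap_loss q.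
Proof.
  intro HM.
  set (c1 := (mu + psi) / M). set (c2 := omega * Cbar * (Ibar * Cbar / M ^ 2)).
  set (c3 := alpha * Abar * (Ibar * Abar / M ^ 2)).
  exists (Rmin c1 (Rmin c2 c3)). split; [unfold c1, c2, c3; positivity |].
  intros q (HS & HI & HC & HA) HSM HIM HCM HAM. unfold dissip, lyap_loss; cbv zeta.
  set (y := sI q / Ibar). set (z := sC q / Cbar). set (w := sA q / Abar).
  assert (Hdiv : forall a p p', 0 <= a -> 0 < p <= p' -> a / p' <= a / p).
  { intros a p p' Ha Hp. apply Rmult_le_compat_l; [exact Ha |]. apply Rinv_le_contravar; lra. }
  assert (Hyz : y * z <= M ^ 2 / (Ibar * Cbar)).
  { unfold y, z. replace (M ^ 2 / (Ibar * Cbar)) with (M * M / (Ibar * Cbar)) by (field; split; positivity).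
    replace (sI q / Ibar * (sC q / Cbar)) with (sI q * sC q / (Ibar * Cbar)) by (field; split; positivity).
    apply Rmult_le_compat_r; [left; positivity | apply Rmult_le_compat; lra]. }
  assert (Hyw : y * w <= M ^ 2 / (Ibar * Abar)).
  { unfold y, w. replace (M ^ 2 / (Ibar * Abar)) with (M * M / (Ibar * Abar)) by (field; split; positivity).
    replace (sI q / Ibar * (sA q / Abar)) with (sI q * sA q / (Ibar * Abar)) by (field; split; positivity).
    apply Rmult_le_compat_r; [left; positivity | apply Rmult_le_compat; lra]. }
  assert (T1 : c1 * (sS q - Sbar) ^ 2 <= (mu + psi) * (sS q - Sbar) ^ 2 / sS q).
  { unfold c1.
    replace ((mu + psi) / M * (sS q - Sbar) ^ 2) with ((mu + psi) * (sS q - Sbar) ^ 2 / M) by (field; lra).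
    apply Hdiv; [apply Rmult_le_pos; [lra | apply pow2_ge_0] | lra]. }
  assert (T2 : c2 * (z - y) ^ 2 <= omega * Cbar * (z - y) ^ 2 / (y * z)).
  { unfold c2. replace (omega * Cbar * (Ibar * Cbar / M ^ 2) * (z - y) ^ 2)
      with (omega * Cbar * (z - y) ^ 2 / (M ^ 2 / (Ibar * Cbar))) by (field; repeat split; positivity).
    apply Hdiv; [apply Rmult_le_pos; [left; positivity | apply pow2_ge_0] |].
    split; [unfold y, z; positivity | exact Hyz]. }
  assert (T3 : c3 * (w - y) ^ 2 <= alpha * Abar * (w - y) ^ 2 / (y * w)).
  { unfold c3. replace (alpha * Abar * (Ibar * Abar / M ^ 2) * (w - y) ^ 2)
      with (alpha * Abar * (w - y) ^ 2 / (M ^ 2 / (Ibar * Abar))) by (field; repeat split; positivity).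
    apply Hdiv; [apply Rmult_le_pos; [left; positivity | apply pow2_ge_0] |].
    split; [unfold y, w; positivity | exact Hyw]. }
  pose proof (Rmin_l c1 (Rmin c2 c3)). pose proof (Rmin_r c1 (Rmin c2 c3)).
  pose proof (Rmin_l c2 c3). pose proof (Rmin_r c2 c3).
  pose proof (pow2_ge_0 (sS q - Sbar)). pose proof (pow2_ge_0 (z - y)). pose proof (pow2_ge_0 (w - y)).
  assert (Rmin c1 (Rmin c2 c3) * (sS q - Sbar) ^ 2 <= c1 * (sS q - Sbar) ^ 2) by (apply Rmult_le_compat_r; lra).
  assert (Rmin c1 (Rmin c2 c3) * (z - y) ^ 2 <= c2 * (z - y) ^ 2) by (apply Rmult_le_compat_r; lra).
  assert (Rmin c1 (Rmin c2 c3) * (w - y) ^ 2 <= c3 * (w - y) ^ 2) by (apply Rmult_le_compat_r; lra).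
  lra.
Qed.

Lemma lyap_terms_nonneg q : SICA_positive q ->
  0 <= Sbar * volterra (sS q / Sbar) /\ 0 <= Ibar * volterra (sI q / Ibar) /\
  0 <= wC * Cbar * volterra (sC q / Cbar) /\ 0 <= wA * Abar * volterra (sA q / Abar).
Proof.
  intros (HS & HI & HC & HA).
  repeat split; apply Rmult_le_pos; try (left; positivity); apply volterra_nonneg; positivity.
Qed.

Lemma lyap_nonneg q : SICA_positive q -> 0 <= lyap q.
Proof. intro Hq. pose proof (lyap_terms_nonneg q Hq). unfold lyap. lra. Qed.

Definition in_box (m M : R) (q : State) : Prop :=
  m <= sS q <= M /\ m <= sI q <= M /\ m <= sC q <= M /\ m <= sA q <= M.

Lemma lyap_sublevel_in_box V : exists m M, 0 < m /\
  forall q, SICA_positive q -> lyap q <= V -> in_box m M q.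
Proof.
  set (lo w b := b * exp (- (V / w + 1))). set (hi w b := b * (2 * (V / w + 1))).
  set (m := Rmin (Rmin (lo Sbar Sbar) (lo Ibar Ibar)) (Rmin (lo (wC * Cbar) Cbar) (lo (wA * Abar) Abar))).
  set (M := Rmax (Rmax (hi Sbar Sbar) (hi Ibar Ibar)) (Rmax (hi (wC * Cbar) Cbar) (hi (wA * Abar) Abar))).
  exists m, M. split; [unfold m, lo; positivity |].
  intros q Hq HV. pose proof (lyap_terms_nonneg q Hq) as (T1 & T2 & T3 & T4).
  destruct Hq as (HS & HI & HC & HA). unfold lyap in HV.
  pose proof (bounds_of_volterra_le Sbar Sbar (sS q) V ltac:(positivity) Sbar_pos HS ltac:(lra)).
  pose proof (bounds_of_volterra_le Ibar Ibar (sI q) V ltac:(positivity) Ibar_pos HI ltac:(lra)).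
  pose proof (bounds_of_volterra_le (wC * Cbar) Cbar (sC q) V ltac:(positivity) Cbar_pos HC ltac:(lra)).
  pose proof (bounds_of_volterra_le (wA * Abar) Abar (sA q) V ltac:(positivity) Abar_pos HA ltac:(lra)).
  fold (lo Sbar Sbar) (lo Ibar Ibar) (lo (wC * Cbar) Cbar) (lo (wA * Abar) Abar) in *.
  fold (hi Sbar Sbar) (hi Ibar Ibar) (hi (wC * Cbar) Cbar) (hi (wA * Abar) Abar) in *.
  assert (m <= lo Sbar Sbar /\ m <= lo Ibar Ibar /\ m <= lo (wC * Cbar) Cbar /\ m <= lo (wA * Abar) Abar).
  { unfold m. repeat split.
    - eapply Rle_trans; [apply Rmin_l | apply Rmin_l].
    - eapply Rle_trans; [apply Rmin_l | apply Rmin_r].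
    - eapply Rle_trans; [apply Rmin_r | apply Rmin_l].
    - eapply Rle_trans; [apply Rmin_r | apply Rmin_r]. }
  assert (hi Sbar Sbar <= M /\ hi Ibar Ibar <= M /\ hi (wC * Cbar) Cbar <= M /\ hi (wA * Abar) Abar <= M).
  { unfold M. repeat split.
    - eapply Rle_trans; [| apply Rmax_l]; apply Rmax_l.
    - eapply Rle_trans; [| apply Rmax_l]; apply Rmax_r.
    - eapply Rle_trans; [| apply Rmax_r]; apply Rmax_l.
    - eapply Rle_trans; [| apply Rmax_r]; apply Rmax_r. }
  unfold in_box. lra.
Qed.

Definition rel_near (r : R) (q : State) : Prop :=
  Rabs (sS q - Sbar) < r * Sbar /\ Rabs (sI q - Ibar) < r * Ibar /\
  Rabs (sC q - Cbar) < r * Cbar /\ Rabs (sA q - Abar) < r * Abar.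

Lemma lyap_sublevel_near r : 0 < r < 1 -> exists eta, 0 < eta /\
  forall q, SICA_positive q -> lyap q < eta -> rel_near r q.
Proof.
  intro Hr. set (g := Rmin (volterra (1 - r)) (volterra (1 + r))).
  assert (Hg : 0 < g) by (apply Rmin_pos; apply volterra_pos; lra).
  set (w := Rmin (Rmin Sbar Ibar) (Rmin (wC * Cbar) (wA * Abar))).
  assert (Hw : w <= Sbar /\ w <= Ibar /\ w <= wC * Cbar /\ w <= wA * Abar).
  { unfold w. repeat split.
    - eapply Rle_trans; [apply Rmin_l | apply Rmin_l].
    - eapply Rle_trans; [apply Rmin_l | apply Rmin_r].
    - eapply Rle_trans; [apply Rmin_r | apply Rmin_l].
    - eapply Rle_trans; [apply Rmin_r | apply Rmin_r]. }
  exists (w * g). split; [unfold w; positivity |].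
  intros q Hq HV. pose proof (lyap_terms_nonneg q Hq) as (T1 & T2 & T3 & T4).
  destruct Hq as (HS & HI & HC & HA). unfold lyap in HV.
  assert (Hscale : forall v, w <= v -> w * g <= v * g) by (intros v Hv; apply Rmult_le_compat_r; lra).
  destruct Hw as (W1 & W2 & W3 & W4).
  unfold rel_near. repeat split.
  - apply (near_of_volterra_lt Sbar); try positivity; try exact Hr. fold g. specialize (Hscale _ W1). lra.
  - apply (near_of_volterra_lt Ibar); try positivity; try exact Hr. fold g. specialize (Hscale _ W2). lra.
  - apply (near_of_volterra_lt (wC * Cbar)); try positivity; try exact Hr.
    fold g. specialize (Hscale _ W3). lra.
  - apply (near_of_volterra_lt (wA * Abar)); try positivity; try exact Hr.
    fold g. specialize (Hscale _ W4). lra.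
Qed.

Lemma lyap_small_near eta : 0 < eta -> exists d, 0 < d /\ forall q,
  Rabs (sS q - Sbar) < d -> Rabs (sI q - Ibar) < d -> Rabs (sC q - Cbar) < d ->
  Rabs (sA q - Abar) < d -> SICA_positive q /\ lyap q < eta.
Proof.
  intro Heta.
  set (K := Sbar / Sbar + Ibar / Ibar + wC * Cbar / Cbar + wA * Abar / Abar).
  assert (HK : 0 < K) by (unfold K; positivity).
  set (half := Rmin (Rmin Sbar Ibar) (Rmin Cbar Abar) / 2).
  assert (Hhalf : half <= Sbar / 2 /\ half <= Ibar / 2 /\ half <= Cbar / 2 /\ half <= Abar / 2).
  { unfold half. repeat split; apply Rmult_le_compat_r; try (left; positivity).
    - eapply Rle_trans; [apply Rmin_l | apply Rmin_l].
    - eapply Rle_trans; [apply Rmin_l | apply Rmin_r].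
    - eapply Rle_trans; [apply Rmin_r | apply Rmin_l].
    - eapply Rle_trans; [apply Rmin_r | apply Rmin_r]. }
  set (d := Rmin half (eta / (K + 1))).
  assert (Hd : d <= half /\ d <= eta / (K + 1)) by (split; [apply Rmin_l | apply Rmin_r]).
  exists d. split; [unfold d, half; positivity |].
  intros q HS HI HC HA. destruct Hhalf as (H1 & H2 & H3 & H4). destruct Hd as (D1 & D2).
  destruct (Rabs_def2 _ _ HS), (Rabs_def2 _ _ HI), (Rabs_def2 _ _ HC), (Rabs_def2 _ _ HA).
  split; [unfold SICA_positive; lra |].
  pose proof (volterra_le_of_near Sbar Sbar (sS q) d ltac:(positivity) Sbar_pos ltac:(lra) ltac:(lra)).
  pose proof (volterra_le_of_near Ibar Ibar (sI q) d ltac:(positivity) Ibar_pos ltac:(lra) ltac:(lra)).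
  pose proof (volterra_le_of_near (wC * Cbar) Cbar (sC q) d ltac:(positivity) Cbar_pos ltac:(lra) ltac:(lra)).
  pose proof (volterra_le_of_near (wA * Abar) Abar (sA q) d ltac:(positivity) Abar_pos ltac:(lra) ltac:(lra)).
  assert (lyap q <= K * d) by (unfold lyap, K; lra).
  assert (K * d <= K * (eta / (K + 1))) by (apply Rmult_le_compat_l; lra).
  assert (K * (eta / (K + 1)) < eta).
  { apply Rmult_lt_reg_r with (K + 1); [lra |].
    replace (K * (eta / (K + 1)) * (K + 1)) with (K * eta) by (field; lra). nra. }
  lra.
Qed.

Section Trajectory.

Variable x : R -> State.
Hypothesis hx : is_solution P x.

Lemma lyap_deriv t : 0 < t -> SICA_positive (x t) ->
  derivable_pt_lim (fun s => lyap (x s)) t (lyap_dot (x t)).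
Proof.
  intros Ht (HS & HI & HC & HA). destruct (proj1 hx t Ht) as (dS & dI & dC & dA & _).
  unfold lyap, lyap_dot, volterra.
  eapply derivable_pt_lim_value; [derive; positivity | cbv beta; field; repeat split; positivity].
Qed.

Lemma lyap_nonincr_on s t : 0 < s <= t -> (forall u, s <= u <= t -> SICA_positive (x u)) ->
  lyap (x t) <= lyap (x s).
Proof.
  intros Hst Hpos.
  enough (lyap (x t) - lyap (x s) <= 0 * (t - s)) by lra.
  apply (diff_le_of_deriv_le (fun u => lyap (x u)) (fun u => lyap_dot (x u))); [lra | |].
  - intros u Hu. apply lyap_deriv; [lra | apply Hpos, Hu].
  - intros u Hu. apply lyap_dot_nonpos, Hpos. lra.
Qed.

Lemma positive_forward t0 : 0 < t0 -> SICA_positive (x t0) ->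
  forall t, t0 <= t -> SICA_positive (x t).
Proof.
  intros Ht0 Hpos0.
  destruct (lyap_sublevel_in_box (lyap (x t0))) as (m & M & Hm & Hbox).
  apply (real_induction (fun t => SICA_positive (x t)) t0 Hpos0).
  - intros t Ht Hbefore. destruct (proj1 hx t ltac:(lra)) as (dS & dI & dC & dA & _).
    assert (Hlow : forall s, t0 <= s < t -> in_box m M (x s)).
    { intros s Hs. apply Hbox; [apply Hbefore, Hs |].
      apply lyap_nonincr_on; [lra |]. intros u Hu. apply Hbefore. lra. }
    assert (Hlim : forall f l, derivable_pt_lim f t l -> (forall s, t0 <= s < t -> m <= f s) -> 0 < f t).
    { intros f l Hf Hge. enough (m <= f t) by lra.
      exact (continuity_pt_ge_left f t0 t m Ht (continuity_pt_of_deriv _ _ _ Hf) Hge). }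
    repeat split; [apply (Hlim _ _ dS) | apply (Hlim _ _ dI) | apply (Hlim _ _ dC) | apply (Hlim _ _ dA)];
      intros s Hs; destruct (Hlow s Hs) as (B1 & B2 & B3 & B4); lra.
  - intros t Ht (HS & HI & HC & HA). destruct (proj1 hx t ltac:(lra)) as (dS & dI & dC & dA & _).
    destruct (continuity_pt_pos_right _ _ (continuity_pt_of_deriv _ _ _ dS) HS) as [h1 [Hh1 P1]].
    destruct (continuity_pt_pos_right _ _ (continuity_pt_of_deriv _ _ _ dI) HI) as [h2 [Hh2 P2]].
    destruct (continuity_pt_pos_right _ _ (continuity_pt_of_deriv _ _ _ dC) HC) as [h3 [Hh3 P3]].
    destruct (continuity_pt_pos_right _ _ (continuity_pt_of_deriv _ _ _ dA) HA) as [h4 [Hh4 P4]].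
    exists (Rmin (Rmin h1 h2) (Rmin h3 h4)). split; [positivity |].
    intros s Hs. pose proof (Rmin_l (Rmin h1 h2) (Rmin h3 h4)). pose proof (Rmin_r (Rmin h1 h2) (Rmin h3 h4)).
    pose proof (Rmin_l h1 h2). pose proof (Rmin_r h1 h2). pose proof (Rmin_l h3 h4). pose proof (Rmin_r h3 h4).
    repeat split; [apply P1 | apply P2 | apply P3 | apply P4]; lra.
Qed.

Lemma lyap_nonincr t0 : 0 < t0 -> SICA_positive (x t0) ->
  forall s t, t0 <= s <= t -> lyap (x t) <= lyap (x s).
Proof.
  intros Ht0 Hpos0 s t Hst. apply lyap_nonincr_on; [lra |].
  intros u Hu. apply (positive_forward t0); [exact Ht0 | exact Hpos0 | lra].
Qed.

Lemma solution_right_cont0 :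
  right_cont0 (fun t => sS (x t)) /\ right_cont0 (fun t => sI (x t)) /\
  right_cont0 (fun t => sC (x t)) /\ right_cont0 (fun t => sA (x t)) /\
  right_cont0 (fun t => sE (x t)).
Proof. destruct hx as [_ Hrc]. repeat split; apply right_cont0_intro, Hrc; auto. Qed.

Lemma positive_soon : OmegaP P (x 0) -> ~ OmegaP0 P (x 0) ->
  exists t0, 0 < t0 /\ SICA_positive (x t0).
Proof.
  intros Hom Hnot. pose proof Hom as (S0 & I0 & C0 & A0 & _).
  destruct solution_right_cont0 as (rS & rI & rC & rA & _). pose proof (proj1 hx) as Hd.
  assert (rfS : right_cont0 (fun t => fS (x t))) by (unfold Defs.fS; right_cont).
  assert (rfI : right_cont0 (fun t => fI (x t))) by (unfold Defs.fI; right_cont).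
  destruct (right_cont0_eventually_pos _ _ rS rfS) as [h1 [Hh1 PS]];
    [intros t Ht; apply (Hd t Ht) | exact S0 | |].
  { intro Hz. cbv beta in Hz |- *. unfold Defs.fS. rewrite Hz. lra. }
  destruct (right_cont0_eventually_pos _ _ rI rfI) as [h2 [Hh2 PI]];
    [intros t Ht; apply (Hd t Ht) | exact I0 | |].
  { intro Hz. cbv beta in Hz |- *.
    assert (Hinf : 0 < sC (x 0) \/ 0 < sA (x 0)).
    { destruct (Rle_lt_or_eq_dec _ _ C0) as [| Cz]; [now left |].
      destruct (Rle_lt_or_eq_dec _ _ A0) as [| Az]; [now right |].
      exfalso. apply Hnot. split; [exact Hom | repeat split; lra]. }
    unfold Defs.fI. rewrite Hz.
    assert (0 <= beta1 * (0 + etaC * sC (x 0) + etaA * sA (x 0)) * sS (x 0))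
      by (apply Rmult_le_pos; [apply Rmult_le_pos; [left; positivity | nra] | exact S0]).
    destruct Hinf; nra. }
  assert (PC : forall t, 0 < t < h2 -> 0 < sC (x t)).
  { apply (pos_of_linear_ode _ (fun t => phi * sI (x t)) xi2 h2 rC C0).
    - intros t Ht. apply (Hd t ltac:(lra)).
    - intros t Ht. apply Rmult_lt_0_compat; [exact hphi | apply PI, Ht]. }
  assert (PA : forall t, 0 < t < h2 -> 0 < sA (x t)).
  { apply (pos_of_linear_ode _ (fun t => rho * sI (x t)) xi1 h2 rA A0).
    - intros t Ht. apply (Hd t ltac:(lra)).
    - intros t Ht. apply Rmult_lt_0_compat; [exact hrho | apply PI, Ht]. }
  exists (Rmin h1 h2 / 2). pose proof (Rmin_l h1 h2). pose proof (Rmin_r h1 h2).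
  assert (0 < Rmin h1 h2) by positivity.
  split; [lra |]. repeat split; [apply PS | apply PI | apply PC | apply PA]; lra.
Qed.

Lemma E_deviation_deriv t : 0 < t ->
  derivable_pt_lim (fun s => sE (x s) - Ebar) t (psi * (sS (x t) - Sbar) - mu * (sE (x t) - Ebar)).
Proof.
  intro Ht. destruct (proj1 hx t Ht) as (_ & _ & _ & _ & dE).
  eapply derivable_pt_lim_value; [derive | unfold Defs.fE, Ebar; field; positivity].
Qed.

Section Convergence.

Variables (t0 m M : R).
Hypotheses (ht0 : 0 < t0) (hm : 0 < m) (hbox : forall t, t0 <= t -> in_box m M (x t)).

Let box_positive t : t0 <= t -> SICA_positive (x t).
Proof. intro Ht. destruct (hbox t Ht) as (B1 & B2 & B3 & B4). repeat split; lra. Qed.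

Let components_bounded :
  bounded_from t0 (fun t => sS (x t)) /\ bounded_from t0 (fun t => sI (x t)) /\
  bounded_from t0 (fun t => sC (x t)) /\ bounded_from t0 (fun t => sA (x t)).
Proof.
  repeat split; exists M; intros t Ht; destruct (hbox t Ht) as (B1 & B2 & B3 & B4);
    rewrite Rabs_right; lra.
Qed.

Lemma dissip_vanishes : vanishes_at_infty (fun t => dissip (x t)).
Proof.
  assert (HM : 0 < M) by (destruct (hbox t0 (Rle_refl t0)) as (B & _); lra).
  destruct (lyap_loss_ge_dissip M HM) as (c & Hc & Hloss).
  destruct components_bounded as (bS & bI & bC & bA).
  eapply (barbalat_dissipation (fun t => lyap (x t)) (fun t => lyap_dot (x t)) _ _ t0 c Hc).
  - intros t Ht. apply lyap_deriv; [lra | apply box_positive, Ht].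
  - intros t Ht. pose proof (lyap_dot_le (x t) (box_positive t Ht)).
    destruct (hbox t Ht) as (B1 & B2 & B3 & B4).
    pose proof (Hloss (x t) (box_positive t Ht) ltac:(lra) ltac:(lra) ltac:(lra) ltac:(lra)). lra.
  - intros t Ht. unfold dissip. pose proof (pow2_ge_0 (sS (x t) - Sbar)).
    pose proof (pow2_ge_0 (sC (x t) / Cbar - sI (x t) / Ibar)).
    pose proof (pow2_ge_0 (sA (x t) / Abar - sI (x t) / Ibar)). lra.
  - intros t Ht. destruct (proj1 hx t ltac:(lra)) as (dS & dI & dC & dA & _).
    unfold dissip. derive.
  - unfold Defs.fS, Defs.fI, Defs.fC, Defs.fA. bounded.
  - apply (cauchy_at_infty_of_nonincreasing _ t0 0).
    + intros s t Hst. apply (lyap_nonincr t0 ht0 (box_positive t0 (Rle_refl t0))). lra.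
    + intros t Ht. apply lyap_nonneg, box_positive, Ht.
Qed.

Let vanishes_of_le_dissip f : (forall t, f t ^ 2 <= dissip (x t)) -> vanishes_at_infty f.
Proof.
  intro Hf. apply vanishes_sqr, (vanishes_le t0 (fun t => dissip (x t))); [| exact dissip_vanishes].
  intros t Ht. pose proof (pow2_ge_0 (f t)). pose proof (Hf t).
  rewrite !Rabs_right by lra. lra.
Qed.

Lemma S_converges : vanishes_at_infty (fun t => sS (x t) - Sbar).
Proof.
  apply vanishes_of_le_dissip. intro t. unfold dissip.
  pose proof (pow2_ge_0 (sC (x t) / Cbar - sI (x t) / Ibar)).
  pose proof (pow2_ge_0 (sA (x t) / Abar - sI (x t) / Ibar)). lra.
Qed.

Lemma CI_converges : vanishes_at_infty (fun t => sC (x t) / Cbar - sI (x t) / Ibar).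
Proof.
  apply vanishes_of_le_dissip. intro t. unfold dissip.
  pose proof (pow2_ge_0 (sS (x t) - Sbar)). pose proof (pow2_ge_0 (sA (x t) / Abar - sI (x t) / Ibar)). lra.
Qed.

Lemma AI_converges : vanishes_at_infty (fun t => sA (x t) / Abar - sI (x t) / Ibar).
Proof.
  apply vanishes_of_le_dissip. intro t. unfold dissip.
  pose proof (pow2_ge_0 (sS (x t) - Sbar)). pose proof (pow2_ge_0 (sC (x t) / Cbar - sI (x t) / Ibar)). lra.
Qed.

Lemma fS_vanishes : vanishes_at_infty (fun t => fS (x t)).
Proof.
  destruct components_bounded as (bS & bI & bC & bA).
  eapply (barbalat_deriv (fun t => sS (x t)) (fun t => fS (x t)) _ t0).
  - intros t Ht. apply (proj1 hx t ltac:(lra)).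
  - intros t Ht. destruct (proj1 hx t ltac:(lra)) as (dS & dI & dC & dA & _).
    unfold Defs.fS. derive.
  - unfold Defs.fS, Defs.fI, Defs.fC, Defs.fA. bounded.
  - exact (cauchy_at_infty_of_vanishes _ _ S_converges).
Qed.

(* Solving the S equation for I expresses I - Ibar through S', S - Sbar and the two ratio
   deviations. *)
Lemma I_converges : vanishes_at_infty (fun t => sI (x t) - Ibar).
Proof.
  pose proof endemic_equilibrium as (E1 & _).
  unfold Defs.fS in E1. simpl in E1.
  assert (Hforce : Ibar + etaC * Cbar + etaA * Abar = kappa * Ibar)
    by (unfold kappa, Cbar, Abar; field; split; positivity).
  assert (HLam : Lam = beta1 * kappa * Ibar * Sbar + (mu + psi) * Sbar) by (rewrite Hforce in E1; lra).
  apply (vanishes_eventually_eq t0 (fun t =>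
    - / (beta1 * kappa * sS (x t)) * (fS (x t) + (mu + psi + beta1 * kappa * Ibar) * (sS (x t) - Sbar))
    + - (etaC * Cbar / kappa) * (sC (x t) / Cbar - sI (x t) / Ibar)
    + - (etaA * Abar / kappa) * (sA (x t) / Abar - sI (x t) / Ibar))).
  - intros t Ht. destruct (box_positive t Ht) as (HS & _).
    unfold Defs.fS. rewrite HLam. unfold kappa, Cbar, Abar. field. repeat split; positivity.
  - repeat apply vanishes_plus; try apply vanishes_scal; [| exact CI_converges | exact AI_converges].
    apply (vanishes_mult_bounded t0).
    + exists (/ (beta1 * kappa * m)). intros t Ht. destruct (hbox t Ht) as ((HmS & _) & _).
      rewrite Rabs_Ropp, Rabs_right by (left; positivity).
      apply Rinv_le_contravar; [positivity | apply Rmult_le_compat_l; [left; positivity | exact HmS]].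
    + apply vanishes_plus; [exact fS_vanishes | apply vanishes_scal, S_converges].
Qed.

Lemma C_converges : vanishes_at_infty (fun t => sC (x t) - Cbar).
Proof.
  apply (vanishes_eventually_eq t0 (fun t =>
    Cbar * (sC (x t) / Cbar - sI (x t) / Ibar) + Cbar / Ibar * (sI (x t) - Ibar))).
  - intros t Ht. field. split; positivity.
  - apply vanishes_plus; apply vanishes_scal; [exact CI_converges | exact I_converges].
Qed.

Lemma A_converges : vanishes_at_infty (fun t => sA (x t) - Abar).
Proof.
  apply (vanishes_eventually_eq t0 (fun t =>
    Abar * (sA (x t) / Abar - sI (x t) / Ibar) + Abar / Ibar * (sI (x t) - Ibar))).
  - intros t Ht. field. split; positivity.
  - apply vanishes_plus; apply vanishes_scal; [exact AI_converges | exact I_converges].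
Qed.

Lemma E_converges : vanishes_at_infty (fun t => sE (x t) - Ebar).
Proof.
  apply (linear_ode_vanishes _ (fun t => psi * (sS (x t) - Sbar)) t0 mu hmu).
  - intros t Ht. apply E_deviation_deriv. lra.
  - apply vanishes_scal, S_converges.
Qed.

End Convergence.

Lemma converges_to_endemic : OmegaP P (x 0) -> ~ OmegaP0 P (x 0) ->
  forall eps, 0 < eps -> exists T, forall t, T <= t -> dist5 (x t) endemic < eps.
Proof.
  intros Hom Hnot.
  destruct (positive_soon Hom Hnot) as (t0 & Ht0 & Hpos0).
  destruct (lyap_sublevel_in_box (lyap (x t0))) as (m & M & Hm & Hbox).
  assert (Hbox' : forall t, t0 <= t -> in_box m M (x t)).
  { intros t Ht. apply Hbox; [apply (positive_forward t0); auto |].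
    apply (lyap_nonincr t0); auto; lra. }
  apply dist5_vanishes.
  - exact (S_converges t0 m M Ht0 Hm Hbox').
  - exact (I_converges t0 m M Ht0 Hm Hbox').
  - exact (C_converges t0 m M Ht0 Hm Hbox').
  - exact (A_converges t0 m M Ht0 Hm Hbox').
  - exact (E_converges t0 m M Ht0 Hm Hbox').
Qed.

Lemma near_initial_soon t d : 0 < t -> 0 < d -> exists s, 0 < s < t /\ dist5 (x s) (x 0) < d.
Proof.
  intros Ht Hd. destruct solution_right_cont0 as (rS & rI & rC & rA & rE).
  assert (Hsq : right_cont0 (fun u => (sS (x u) - sS (x 0)) ^ 2 + (sI (x u) - sI (x 0)) ^ 2
    + (sC (x u) - sC (x 0)) ^ 2 + (sA (x u) - sA (x 0)) ^ 2 + (sE (x u) - sE (x 0)) ^ 2)) by right_cont.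
  destruct (right_cont0_elim _ Hsq (d ^ 2) ltac:(positivity)) as [h [Hh Hnear]].
  exists (Rmin t h / 2). pose proof (Rmin_l t h). pose proof (Rmin_r t h).
  assert (0 < Rmin t h) by positivity. split; [lra |].
  specialize (Hnear (Rmin t h / 2) ltac:(lra)). rewrite !Rminus_diag in Hnear.
  unfold dist5. rewrite <- (sqrt_pow2 d) by lra. apply sqrt_lt_1_alt. split.
  - set (s := Rmin t h / 2).
    pose proof (pow2_ge_0 (sS (x s) - sS (x 0))). pose proof (pow2_ge_0 (sI (x s) - sI (x 0))).
    pose proof (pow2_ge_0 (sC (x s) - sC (x 0))). pose proof (pow2_ge_0 (sA (x s) - sA (x 0))).
    pose proof (pow2_ge_0 (sE (x s) - sE (x 0))). lra.
  - apply Rabs_def2 in Hnear. simpl in Hnear |- *. lra.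
Qed.

Lemma E_deviation_le s K : 0 < s -> (forall t, s <= t -> Rabs (sS (x t) - Sbar) <= K) ->
  forall t, s <= t -> Rabs (sE (x t) - Ebar) <= psi * K / mu + Rabs (sE (x s) - Ebar).
Proof.
  intros Hs HK t Ht.
  assert (Hforcing : forall u, s <= u -> Rabs (psi * (sS (x u) - Sbar)) <= psi * K).
  { intros u Hu. rewrite Rabs_mult, Rabs_right by lra. apply Rmult_le_compat_l; [lra | apply HK, Hu]. }
  assert (Hb := linear_ode_bound (fun u => sE (x u) - Ebar) (fun u => psi * (sS (x u) - Sbar)) s mu (psi * K)
    hmu ltac:(intros u Hu; apply E_deviation_deriv; lra) Hforcing t Ht).
  pose proof (exp_le_1 (- mu * (t - s)) ltac:(nra)). pose proof (Rabs_pos (sE (x s) - Ebar)).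
  assert (Rabs (sE (x s) - Ebar) * exp (- mu * (t - s)) <= Rabs (sE (x s) - Ebar)) by
    (rewrite <- (Rmult_1_r (Rabs (sE (x s) - Ebar))) at 2; apply Rmult_le_compat_l; lra).
  cbv beta in Hb. lra.
Qed.

Lemma near_endemic_soon t delta : 0 < t -> dist5 (x 0) endemic < delta -> exists s, 0 < s < t /\
  Rabs (sS (x s) - Sbar) < 2 * delta /\ Rabs (sI (x s) - Ibar) < 2 * delta /\
  Rabs (sC (x s) - Cbar) < 2 * delta /\ Rabs (sA (x s) - Abar) < 2 * delta /\
  Rabs (sE (x s) - Ebar) < 2 * delta.
Proof.
  intros Ht Hx0. assert (Hdelta : 0 < delta) by (pose proof (Rabs_sub_le_dist5 (x 0) endemic) as [H _];
    pose proof (Rabs_pos (sS (x 0) - sS endemic)); lra).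
  destruct (near_initial_soon t delta Ht Hdelta) as (s & Hs & Hxs). exists s. split; [exact Hs |].
  destruct (Rabs_sub_le_dist5 (x s) (x 0)) as (D1 & D2 & D3 & D4 & D5).
  destruct (Rabs_sub_le_dist5 (x 0) endemic) as (F1 & F2 & F3 & F4 & F5). simpl in F1, F2, F3, F4, F5.
  assert (Htri : forall a b c, Rabs (a - b) <= dist5 (x s) (x 0) -> Rabs (b - c) <= dist5 (x 0) endemic ->
                   Rabs (a - c) < 2 * delta).
  { intros a b c Hab Hbc. replace (a - c) with ((a - b) + (b - c)) by ring.
    eapply Rle_lt_trans; [apply Rabs_triang | lra]. }
  repeat split; eapply Htri; eassumption.
Qed.

Lemma stays_rel_near s r eta : 0 < s -> SICA_positive (x s) -> lyap (x s) < eta ->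
  (forall q, SICA_positive q -> lyap q < eta -> rel_near r q) ->
  forall t, s <= t -> rel_near r (x t) /\ Rabs (sE (x t) - Ebar) <= r * Ebar + Rabs (sE (x s) - Ebar).
Proof.
  intros Hs Hpos Hlyap Hnear.
  assert (Hclose : forall t, s <= t -> rel_near r (x t)).
  { intros t Ht. apply Hnear; [apply (positive_forward s); auto |].
    apply Rle_lt_trans with (lyap (x s)); [apply (lyap_nonincr s); auto; lra | exact Hlyap]. }
  intros t Ht. split; [apply Hclose, Ht |].
  replace (r * Ebar) with (psi * (r * Sbar) / mu) by (unfold Ebar; field; positivity).
  apply (E_deviation_le s); [exact Hs | | exact Ht]. intros u Hu. left. apply Hclose, Hu.
Qed.

End Trajectory.

Lemma endemic_stable eps : 0 < eps -> exists delta, 0 < delta /\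
  forall x, is_solution P x -> dist5 (x 0) endemic < delta ->
  forall t, 0 <= t -> dist5 (x t) endemic < eps.
Proof.
  intro Heps. pose proof Sbar_pos. pose proof Ibar_pos. pose proof Cbar_pos. pose proof Abar_pos.
  assert (HEbar : 0 <= Ebar)
    by (unfold Ebar; apply Rmult_le_pos; [apply Rmult_le_pos; [lra | left; positivity] | left; positivity]).
  set (B := Sbar + Ibar + Cbar + Abar + Ebar).
  assert (HB : 0 < B) by (unfold B; lra).
  set (r := Rmin (1 / 2) (eps / (6 * B))).
  assert (Hr : 0 < r < 1) by (unfold r; split; [positivity | pose proof (Rmin_l (1 / 2) (eps / (6 * B))); lra]).
  assert (HrB : r * B <= eps / 6).
  { apply Rle_trans with (eps / (6 * B) * B); [apply Rmult_le_compat_r; [lra | apply Rmin_r] |].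
    right. field. lra. }
  destruct (lyap_sublevel_near r Hr) as (eta & Heta & Hnear).
  destruct (lyap_small_near eta Heta) as (d & Hd & Hsmall).
  set (delta := Rmin (d / 2) (eps / 12)).
  assert (Hdelta : 0 < delta /\ delta <= d / 2 /\ delta <= eps / 12)
    by (unfold delta; split; [positivity | split; [apply Rmin_l | apply Rmin_r]]).
  exists delta. split; [apply Hdelta |].
  intros x hx Hx0 t Ht. destruct (Rle_lt_or_eq_dec _ _ Ht) as [Htpos | <-]; [| lra].
  destruct (near_endemic_soon x hx t delta Htpos Hx0) as (s & Hs & N1 & N2 & N3 & N4 & N5).
  destruct (Hsmall (x s)) as (Hpos_s & Hlyap_s); try lra.
  destruct (stays_rel_near x hx s r eta ltac:(lra) Hpos_s Hlyap_s Hnear t ltac:(lra))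
    as ((C1 & C2 & C3 & C4) & C5).
  assert (r * Sbar <= r * B /\ r * Ibar <= r * B /\ r * Cbar <= r * B /\ r * Abar <= r * B /\ r * Ebar <= r * B)
    as (B1 & B2 & B3 & B4 & B5) by (unfold B; repeat split; apply Rmult_le_compat_l; lra).
  apply dist5_lt; simpl; lra.
Qed.

Lemma endemic_GAS : GAS_on (is_solution P) (fun x => OmegaP P x /\ ~ OmegaP0 P x) endemic.
Proof.
  split.
  - intros eps Heps. destruct (endemic_stable eps Heps) as (delta & Hdelta & Hstable).
    exists delta. split; [exact Hdelta |]. intros x hx _. apply Hstable, hx.
  - intros x hx [Hom Hnot]. exact (converges_to_endemic x hx Hom Hnot).
Qed.

End Model.

Theorem mainTheorem4 (P : Params)
  (hLam : 0 < Lam P) (hmu : 0 < mu P) (hbeta : 0 < beta P) (hrho : 0 < rho P)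
  (hphi : 0 < phi P) (halpha : 0 < alpha P) (homega : 0 < omega P)
  (hpsi : 0 <= psi P) (hetaC0 : 0 < etaC P) (hetaC1 : etaC P <= 1)
  (hetaA : 1 <= etaA P)
  (hR0 : repro_number P > 1) :
  exists p : State,
    (* p is the unique endemic equilibrium (equilibrium with I, C, A > 0) *)
    is_equilibrium P p /\
    0 < sI p /\ 0 < sC p /\ 0 < sA p /\
    (forall q : State, is_equilibrium P q ->
       0 < sI q -> 0 < sC q -> 0 < sA q -> q = p) /\
    (* its first and last components *)
    sS p = mu P * (xi1 P * (phi P + xi2 P) + rho P * xi2 P)
           / (beta1 P * (xi1 P * (xi2 P + etaC P * phi P)
                         + etaA P * rho P * xi2 P)) /\
    sE p = psi P * sS p / mu P /\
    (* global asymptotic stability in Omega_P \ Omega_P0 *)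
    GAS_on (is_solution P) (fun x => OmegaP P x /\ ~ OmegaP0 P x) p.
Proof.
  assert (hetaA0 : 0 < etaA P) by lra.
  exists (endemic P).
  split; [eapply endemic_equilibrium; eassumption |].
  split; [eapply Ibar_pos; eassumption |].
  split; [eapply Cbar_pos; eassumption |].
  split; [eapply Abar_pos; eassumption |].
  split; [intros q Hq HI HC HA; eapply endemic_unique; eassumption |].
  split; [reflexivity |].
  split; [reflexivity |].
  eapply endemic_GAS; eassumption.
Qed.
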